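(* Let $\mathbb Z\langle X\rangle$ be the free unital associative ring on $X=\{x_1,x_2,\dots\}$ and let $T^{(4)}$ be its two-sided ideal generated by all $[a_1,a_2,a_3,a_4]$ ($a_i\in\mathbb Z\langle X\rangle$). Then $T^{(4)}$ is generated as a left ideal of $\mathbb Z\langle X\rangle$ by the polynomials \begin{gather*} [x_{i_1},x_{i_2},\dots,x_{i_k}]\quad(k\ge4,\ i_l\in\mathbb N),\qquad [x_{i_1},x_{i_2},x_{i_3}][x_{i_4},x_{i_5},x_{i_6}]\quad(i_l\in\mathbb N),\\ [x_{i_1},x_{i_2}][x_{i_3},x_{i_4},x_{i_5}]-\operatorname{sgn}(\sigma)[x_{i_{\sigma(1)}},x_{i_{\sigma(2)}}][x_{i_{\sigma(3)}},x_{i_{\sigma(4)}},x_{i_{\sigma(5)}}]\quad(i_l\in\mathbb N,\ \sigma\in S_5),\\ [x_{i_1},x_{i_2}][x_{i_3},x_{i_4}][x_{i_5},x_{i_6}]-\operatorname{sgn}(\sigma)[x_{i_{\sigma(1)}},x_{i_{\sigma(2)}}][x_{i_{\sigma(3)}},x_{i_{\sigma(4)}}][x_{i_{\sigma(5)}},x_{i_{\sigma(6)}}]\quad(i_l\in\mathbb N,\ \sigma\in S_6). \end{gather*}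
   Context: Commutators are left-normed: $[a,b]=ab-ba$, $[a_1,\dots,a_n]=[[a_1,\dots,a_{n-1}],a_n]$. *)

(* Z<X> is the monoid algebra over int of the free monoid
   {fmonom nat} (words over nat) from multinomials' monalg. *)
From HB Require Import structures.
From mathcomp Require Import all_boot all_order all_algebra all_fingroup.
From mathcomp.multinomials Require Import monalg.
Set Implicit Arguments. Unset Strict Implicit. Unset Printing Implicit Defensive.
Import Order.TTheory GRing.Theory Num.Theory.
Local Open Scope ring_scope.

Definition ZX : Type := {malg int[{fmonom nat}]}.

Definition xv (i : nat) : ZX := << fmu i >>.

Definition comm (a b : ZX) : ZX := a * b - b * a.

Definition lcomm (a : ZX) (s : seq ZX) : ZX := foldl comm a s.

Inductive ideal2 (S : ZX -> Prop) : ZX -> Prop :=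
| ideal2_gen s : S s -> ideal2 S s
| ideal2_0 : ideal2 S 0
| ideal2_add a b : ideal2 S a -> ideal2 S b -> ideal2 S (a + b)
| ideal2_opp a : ideal2 S a -> ideal2 S (- a)
| ideal2_mull r a : ideal2 S a -> ideal2 S (r * a)
| ideal2_mulr a r : ideal2 S a -> ideal2 S (a * r).

Inductive lideal (S : ZX -> Prop) : ZX -> Prop :=
| lideal_gen s : S s -> lideal S s
| lideal_0 : lideal S 0
| lideal_add a b : lideal S a -> lideal S b -> lideal S (a + b)
| lideal_opp a : lideal S a -> lideal S (- a)
| lideal_mull r a : lideal S a -> lideal S (r * a).

Definition T4gens (f : ZX) : Prop :=
  exists a1 a2 a3 a4 : ZX, f = lcomm a1 [:: a2; a3; a4].

Definition T4 : ZX -> Prop := ideal2 T4gens.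

Definition sgn n (s : 'S_n) : ZX := (-1) ^+ odd_perm s.

Definition p23 (i : 'I_5 -> nat) : ZX :=
  let y k := xv (i (inord k)) in
  comm (y 0%N) (y 1%N) * lcomm (y 2%N) [:: y 3%N; y 4%N].

Definition p222 (i : 'I_6 -> nat) : ZX :=
  let y k := xv (i (inord k)) in
  comm (y 0%N) (y 1%N) * comm (y 2%N) (y 3%N) * comm (y 4%N) (y 5%N).

Definition p33 (i : 'I_6 -> nat) : ZX :=
  let y k := xv (i (inord k)) in
  lcomm (y 0%N) [:: y 1%N; y 2%N] * lcomm (y 3%N) [:: y 4%N; y 5%N].

Definition Gens (f : ZX) : Prop :=
  (exists (i1 : nat) (s : seq nat), (3 <= size s)%N /\ f = lcomm (xv i1) (map xv s))
  \/ (exists i : 'I_6 -> nat, f = p33 i)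
  \/ (exists (i : 'I_5 -> nat) (s : 'S_5), f = p23 i - sgn s * p23 (i \o s))
  \/ (exists (i : 'I_6 -> nat) (s : 'S_6), f = p222 i - sgn s * p222 (i \o s)).

(* Every listed polynomial lies in T4: [x,y,z][u,v,w] and the transposition relations of
   [x,y][z,u,v] and [x,y][z,u][v,w] are explicit two-sided combinations of 4-fold
   commutators, and the full sign relations for S_5 and S_6 follow because adjacent
   transpositions generate the symmetric group.

   Conversely, let L be the left ideal generated by the list. Commuting a generator past a
   letter lands back in L, so L is two-sided and it remains to show [a,b,c,d] in L. By
   multilinearity a, b, c, d may be taken to be monomials, and we induct on their total
   degree, simultaneously for four families evaluated at monomials: [a,b,c,d],
   [a,b,c][d,e,f], and the transposition relations of [a,b][c,d,e] and [a,b][c,d][e,f].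
   Writing one argument as a product uv of shorter monomials, each family F obeys the
   Leibniz rule F(uv) = u F(v) + F(u) v modulo the two-sided ideal generated by members of
   the families of smaller degree (and of earlier families of the same degree); when all
   arguments are letters the members of the families are generators. *)

From mathcomp Require Import all_boot all_algebra all_fingroup.
From mathcomp.multinomials Require Import monalg.
From mathcomp Require Import zify.
Set Implicit Arguments. Unset Strict Implicit. Unset Printing Implicit Defensive.
Import GRing.Theory.
Local Open Scope ring_scope.

Section NoncommutativeNormalization.
Variable R : pzRingType.

Inductive ncterm :=
| NCVar of nat | NC0 | NC1
| NCAdd of ncterm & ncterm | NCOpp of ncterm | NCMul of ncterm & ncterm
| NCMuln of ncterm & nat.

Fixpoint ncterm_eval (env : seq R) (t : ncterm) : R :=
  match t with
  | NCVar n => nth 0 env n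
  | NC0 => 0
  | NC1 => 1
  | NCAdd a b => ncterm_eval env a + ncterm_eval env b
  | NCOpp a => - ncterm_eval env a
  | NCMul a b => ncterm_eval env a * ncterm_eval env b
  | NCMuln a n => ncterm_eval env a *+ n
  end.

(* A list of (coefficient, word) pairs; a word lists indices into the atom environment. *)
Definition ncpoly := seq (int * seq nat).

Definition ncword_eval (env : seq R) (w : seq nat) : R :=
  foldr (fun i acc => nth 0 env i * acc) 1 w.

Definition ncpoly_eval (env : seq R) (p : ncpoly) : R :=
  foldr (fun m acc => ncword_eval env m.2 *~ m.1 + acc) 0 p.

Definition ncpoly_mul (p q : ncpoly) : ncpoly :=
  [seq (m.1 * n.1, m.2 ++ n.2) | m <- p, n <- q].

Fixpoint ncterm_norm (t : ncterm) : ncpoly :=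
  match t with
  | NCVar n => [:: (1%Z, [:: n])]
  | NC0 => [::]
  | NC1 => [:: (1%Z, [::])]
  | NCAdd a b => ncterm_norm a ++ ncterm_norm b
  | NCOpp a => [seq (- m.1, m.2) | m <- ncterm_norm a]
  | NCMul a b => ncpoly_mul (ncterm_norm a) (ncterm_norm b)
  | NCMuln a n => [seq (m.1 *+ n, m.2) | m <- ncterm_norm a]
  end.

Fixpoint ncpoly_insert (m : int * seq nat) (p : ncpoly) : ncpoly :=
  if p is n :: p' then
    if n.2 == m.2 then (n.1 + m.1, n.2) :: p' else n :: ncpoly_insert m p'
  else [:: m].

Definition ncpoly_collect (p : ncpoly) : ncpoly := foldr ncpoly_insert [::] p.

Lemma ncword_eval_cat env w1 w2 :
  ncword_eval env (w1 ++ w2) = ncword_eval env w1 * ncword_eval env w2.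
Proof. by elim: w1 => [|i w IH] /=; rewrite ?mul1r // IH mulrA. Qed.

Lemma ncpoly_eval_cat env p q :
  ncpoly_eval env (p ++ q) = ncpoly_eval env p + ncpoly_eval env q.
Proof. by elim: p => [|m p IH] /=; rewrite ?add0r // IH addrA. Qed.

Lemma ncpoly_eval_opp env p :
  ncpoly_eval env [seq (- m.1, m.2) | m <- p] = - ncpoly_eval env p.
Proof. by elim: p => [|m p IH] /=; rewrite ?oppr0 // IH opprD mulrNz. Qed.

Lemma ncpoly_eval_muln env p n :
  ncpoly_eval env [seq (m.1 *+ n, m.2) | m <- p] = ncpoly_eval env p *+ n.
Proof.
by elim: p => [|m p IH] /=; rewrite ?mul0rn // IH mulrnDl -mulr_natr mulrzA mulrz_nat.
Qed.

Lemma ncpoly_eval_mul env p q :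
  ncpoly_eval env (ncpoly_mul p q) = ncpoly_eval env p * ncpoly_eval env q.
Proof.
elim: p => [|m p IH] /=; first by rewrite mul0r.
rewrite ncpoly_eval_cat IH mulrDl; congr (_ + _).
clear; elim: q => [|n q IHq] /=; first by rewrite mulr0.
rewrite IHq mulrDr ncword_eval_cat; congr (_ + _).
by rewrite mulrzAl mulrzAr -mulrzA mulrC.
Qed.

Lemma ncterm_normP env t : ncterm_eval env t = ncpoly_eval env (ncterm_norm t).
Proof.
elim: t => [n|||a IHa b IHb|a IHa|a IHa b IHb|a IHa n] /=; rewrite ?addr0 ?mulr1 //.
- by rewrite ncpoly_eval_cat IHa IHb.
- by rewrite ncpoly_eval_opp IHa.
- by rewrite ncpoly_eval_mul IHa IHb.
- by rewrite ncpoly_eval_muln IHa.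
Qed.

Lemma ncpoly_collectP env p : ncpoly_eval env (ncpoly_collect p) = ncpoly_eval env p.
Proof.
elim: p => [|m p IHp] //=; rewrite -IHp; elim: (ncpoly_collect p) => [|n q IH] //=.
case: eqP => [->|_] /=; first by rewrite mulrzDr -addrA addrCA.
by rewrite IH addrCA.
Qed.

Lemma ncterm_eval_eq env a b :
  all (fun m => m.1 == 0) (ncpoly_collect (ncterm_norm (NCAdd a (NCOpp b)))) ->
  ncterm_eval env a = ncterm_eval env b.
Proof.
move=> p0; apply/eqP; rewrite -subr_eq0; apply/eqP.
rewrite -[_ - _]/(ncterm_eval env (NCAdd a (NCOpp b))) ncterm_normP -ncpoly_collectP.
by elim: (ncpoly_collect _) p0 => [|m p IH] //= /andP[/eqP-> /IH->]; rewrite mulr0z addr0.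
Qed.

End NoncommutativeNormalization.

Ltac nc_mem x l :=
  lazymatch l with
  | nil => constr:(false)
  | (x :: _) => constr:(true)
  | (_ :: ?t) => nc_mem x t
  end.

Ltac nc_index x l :=
  lazymatch l with
  | (x :: _) => constr:(0%N)
  | (_ :: ?t) => let n := nc_index x t in constr:(S n)
  end.

Ltac nc_atoms t l :=
  lazymatch t with
  | @GRing.add _ ?a ?b => let l := nc_atoms a l in nc_atoms b l
  | @GRing.opp _ ?a => nc_atoms a l
  | @GRing.mul _ ?a ?b => let l := nc_atoms a l in nc_atoms b l
  | @GRing.zero _ => l
  | @GRing.one _ => l
  | @GRing.natmul _ ?a ?n => nc_atoms a l
  | @GRing.exp _ ?x 0 => l
  | @GRing.exp _ ?x (S ?n) => nc_atoms x l
  | _ => let b := nc_mem t l in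
         lazymatch b with true => l | false => constr:(t :: l) end
  end.

Ltac nc_reify t l :=
  lazymatch t with
  | @GRing.add _ ?a ?b =>
      let ra := nc_reify a l in let rb := nc_reify b l in constr:(NCAdd ra rb)
  | @GRing.opp _ ?a => let ra := nc_reify a l in constr:(NCOpp ra)
  | @GRing.mul _ ?a ?b =>
      let ra := nc_reify a l in let rb := nc_reify b l in constr:(NCMul ra rb)
  | @GRing.zero _ => constr:(NC0)
  | @GRing.one _ => constr:(NC1)
  | @GRing.natmul _ ?a ?n => let ra := nc_reify a l in constr:(NCMuln ra n)
  | @GRing.exp _ ?x 0 => constr:(NC1)
  | @GRing.exp _ ?x (S ?n) =>
      let rx := nc_reify x l in let rn := nc_reify (@GRing.exp _ x n) l in
      constr:(NCMul rx rn)
  | _ => let n := nc_index t l in constr:(NCVar n)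
  end.

(* Decides equalities that hold in every ring, treating anything that is not
   a ring operation as an atom. *)
Ltac nc_ring :=
  lazymatch goal with
  | |- @eq ?R ?a ?b =>
    let l := nc_atoms a (@nil R) in
    let l := nc_atoms b l in
    let ra := nc_reify a l in
    let rb := nc_reify b l in
    change (ncterm_eval l ra = ncterm_eval l rb);
    apply: ncterm_eval_eq; vm_compute; reflexivity
  end.

Definition is_ideal (I : ZX -> Prop) :=
  [/\ I 0, (forall a b, I a -> I b -> I (a + b)), (forall a, I a -> I (- a)),
      (forall r a, I a -> I (r * a)) & (forall r a, I a -> I (a * r))].

Section IdealClosure.
Variables (I : ZX -> Prop) (I_ideal : is_ideal I).

Lemma is_ideal0 : I 0. Proof. by case: I_ideal. Qed.
Lemma is_idealD a b : I a -> I b -> I (a + b). Proof. by case: I_ideal => _ H _ _ _; apply: H. Qed.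
Lemma is_idealN a : I a -> I (- a). Proof. by case: I_ideal => _ _ H _ _; apply: H. Qed.
Lemma is_idealMl r a : I a -> I (r * a). Proof. by case: I_ideal => _ _ _ H _; apply: H. Qed.
Lemma is_idealMr r a : I a -> I (a * r). Proof. by case: I_ideal => _ _ _ _ H; apply: H. Qed.

Lemma is_idealMn a n : I a -> I (a *+ n).
Proof.
move=> Ia; elim: n => [|n IH]; first by rewrite mulr0n; exact: is_ideal0.
by rewrite mulrS; exact: is_idealD.
Qed.

End IdealClosure.

Lemma ideal2_sub (S I : ZX -> Prop) : is_ideal I -> (forall s, S s -> I s) ->
  forall x, ideal2 S x -> I x.
Proof.
move=> I_ideal SI x; elim=> [s /SI //| |a b _ Ia _ Ib|a _ Ia|r a _ Ia|a r _ Ia].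
- exact: (is_ideal0 I_ideal).
- exact: (is_idealD I_ideal).
- exact: (is_idealN I_ideal).
- exact: (is_idealMl I_ideal).
- exact: (is_idealMr I_ideal).
Qed.

Lemma lideal_sub (S I : ZX -> Prop) : is_ideal I -> (forall s, S s -> I s) ->
  forall x, lideal S x -> I x.
Proof.
move=> I_ideal SI x; elim=> [s /SI //| |a b _ Ia _ Ib|a _ Ia|r a _ Ia].
- exact: (is_ideal0 I_ideal).
- exact: (is_idealD I_ideal).
- exact: (is_idealN I_ideal).
- exact: (is_idealMl I_ideal).
Qed.

Lemma T4_ideal : is_ideal T4.
Proof.
split; [exact: ideal2_0 | exact: ideal2_add | exact: ideal2_opp | exact: ideal2_mull |].
by move=> r a; exact: ideal2_mulr.
Qed.

(* [exact_hyp] avoids the costly conversions [assumption] may try on large goals. *)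
Ltac exact_hyp :=
  match goal with |- ?G => match goal with H : ?P |- _ => constr_eq P G; exact H end end.

Ltac ideal_closure I_ideal leaf :=
  first [ exact_hyp | lazymatch goal with
  | |- _ (_ + _) =>
      apply: (is_idealD I_ideal); [ideal_closure I_ideal leaf | ideal_closure I_ideal leaf]
  | |- _ (- _) => apply: (is_idealN I_ideal); ideal_closure I_ideal leaf
  | |- _ (_ *+ _) => apply: (is_idealMn I_ideal); ideal_closure I_ideal leaf
  | |- _ (_ * _) =>
      first [ apply: (is_idealMl I_ideal); ideal_closure I_ideal leaf
            | apply: (is_idealMr I_ideal); ideal_closure I_ideal leaf ]
  | |- _ 0 => exact: (is_ideal0 I_ideal)
  | _ => leaf
  end ].

Ltac ideal_auto I_ideal := ideal_closure I_ideal ltac:(idtac; fail).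

Definition comm3 (a b c : ZX) := comm (comm a b) c.
Definition comm4 (a b c d : ZX) := comm (comm3 a b c) d.
Definition prod23 (a b c d e : ZX) := comm a b * comm3 c d e.
Definition prod33 (a b c d e f : ZX) := comm3 a b c * comm3 d e f.
Definition prod222 (a b c d e f : ZX) := comm a b * comm c d * comm e f.
Definition prod223 (a b c d e f g : ZX) := comm a b * comm c d * comm3 e f g.

Definition prod23_sw23 a b c d e := prod23 a b c d e + prod23 a c b d e.
Definition prod23_sw45 a b c d e := prod23 a b c d e + prod23 a b c e d.
Definition prod222_sw23 a b c d e f := prod222 a b c d e f + prod222 a c b d e f.
Definition prod222_sw45 a b c d e f := prod222 a b c d e f + prod222 a b c e d f.

Ltac comm_ring :=
  rewrite /prod23_sw23 /prod23_sw45 /prod222_sw23 /prod222_sw45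
          /prod23 /prod33 /prod222 /prod223 /comm4 /comm3 /lcomm /comm /=;
  nc_ring.

Lemma T4_comm4 a b c d : T4 (comm4 a b c d).
Proof. by apply: ideal2_gen; exists a, b, c, d. Qed.

Ltac T4_auto := ideal_closure T4_ideal
  ltac:(idtac; lazymatch goal with |- T4 (comm4 _ _ _ _) => exact: T4_comm4 end).

Lemma T4_prod23_sw23 a b c d e : T4 (prod23_sw23 a b c d e).
Proof.
have -> : prod23_sw23 a b c d e =
  comm4 a b c d * e - comm4 a b (c * e) d + comm4 a b c e * d - comm4 a b (d * c) e
  - comm4 a b e c * d + comm4 a b e (d * c) + comm4 a (c * b) d e + comm4 a c b (e * d)
  - comm4 a c (b * e) d - comm4 a c (d * b) e - comm4 a c e b * d + comm4 a c e (d * b)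
  by comm_ring.
T4_auto.
Qed.

Lemma T4_prod23_sw45 a b c d e : T4 (prod23_sw45 a b c d e).
Proof.
have -> : prod23_sw45 a b c d e =
  comm4 a (b * c) d e *+ 4 - comm4 (a * b) c d e - (comm4 a b c d * e) *+ 2
  + comm4 a b c (e * d) *+ 4 - comm4 a b (c * e) d + comm4 (a * b) c e d
  - (comm4 a b c e * d) *+ 2 - a * comm4 b c e d - comm4 a b (d * c) e *+ 3
  + comm4 a (b * d) c e + comm4 (a * b) d c e - comm4 a b d c * e + comm4 (a * b) d e c
  - comm4 a (b * e) c d + comm4 (a * b) e c d - comm4 a b e c * d - a * comm4 b e c d
  + comm4 a b e (d * c) + comm4 a (b * e) d c - comm4 (a * b) e d c - comm4 a (c * b) d e
  + comm4 a c b d * e - comm4 a c b (e * d) *+ 2 - comm4 a c (d * b) e *+ 2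
  + comm4 a (c * d) b e *+ 4 - comm4 (a * c) d b e - comm4 a c d b * e
  + comm4 a c (d * e) b - comm4 a (c * d) e b - comm4 a c e (b * d) + comm4 a (c * e) b d
  + comm4 a c e b * d - comm4 a d (b * c) e *+ 2 + comm4 a d b c * e
  - comm4 a d b (e * c) *+ 2 + comm4 a d (b * e) c + comm4 a d c (b * e)
  + comm4 a d (c * b) e - comm4 a d c (e * b) *+ 2 + comm4 a d (c * e) b
  - comm4 a d e (b * c) + comm4 (a * d) e b c + (comm4 a d e b * c) *+ 2
  - comm4 a d e (c * b) - comm4 a e b (c * d) - comm4 a e (b * c) d + comm4 a e (c * b) d
  by comm_ring.
T4_auto.
Qed.

Lemma prod33_as_prod23 a b c d e f :
  prod33 a b c d e f = prod23_sw23 (a * b) c d e f - prod23_sw23 (b * a) c d e f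
    - prod23_sw23 d (a * b) e c f + prod23_sw23 d (b * a) e c f + comm d e * comm4 a b c f.
Proof. by comm_ring. Qed.

Lemma T4_prod33 a b c d e f : T4 (prod33 a b c d e f).
Proof.
have := T4_prod23_sw23 (a * b) c d e f; have := T4_prod23_sw23 (b * a) c d e f.
have := T4_prod23_sw23 d (a * b) e c f; have := T4_prod23_sw23 d (b * a) e c f.
move=> *; rewrite prod33_as_prod23; T4_auto.
Qed.

Lemma T4_prod222_sw46 a b c d e f : T4 (prod222 a b c d e f + prod222 a b c f e d).
Proof.
have := T4_prod23_sw23 b a (c * e) d f; have := T4_prod23_sw23 b a e d f.
have := T4_prod23_sw23 b a c d f; have := T4_prod33 a b c e d f.
have -> : prod222 a b c d e f + prod222 a b c f e d =
  - prod23_sw23 b a (c * e) d f + c * prod23_sw23 b a e d f + prod23_sw23 b a c d f * e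
  - prod33 a b c e d f + comm c b * comm4 a d f e by comm_ring.
move=> *; T4_auto.
Qed.

(* by Jacobi, [[a,b],[c,d]] = [a,b,c,d] - [a,b,d,c] *)
Lemma prod222_rot_as_comm4 a b c d e f :
  prod222 a b c d e f - prod222 c d e f a b =
  (comm4 a b c d - comm4 a b d c) * comm e f + comm c d * (comm4 a b e f - comm4 a b f e).
Proof. by comm_ring. Qed.

Lemma T4_prod222_rot a b c d e f : T4 (prod222 a b c d e f - prod222 c d e f a b).
Proof. by rewrite prod222_rot_as_comm4; T4_auto. Qed.

Lemma T4_prod222_sw45 a b c d e f : T4 (prod222_sw45 a b c d e f).
Proof.
have := T4_prod222_sw46 a b c e f d.
have -> : prod222_sw45 a b c d e f = - (prod222 a b c e f d + prod222 a b c d f e)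
  by comm_ring.
move=> *; T4_auto.
Qed.

Lemma T4_prod222_sw23 a b c d e f : T4 (prod222_sw23 a b c d e f).
Proof.
have := T4_prod222_sw45 e f a b c d.
have := T4_prod222_rot a b c d e f; have := T4_prod222_rot c d e f a b.
have := T4_prod222_rot a c b d e f; have := T4_prod222_rot b d e f a c.
have -> : prod222_sw23 a b c d e f = prod222_sw45 e f a b c d
  + (prod222 a b c d e f - prod222 c d e f a b) + (prod222 c d e f a b - prod222 e f a b c d)
  + (prod222 a c b d e f - prod222 b d e f a c) + (prod222 b d e f a c - prod222 e f a c b d)
  by comm_ring.
move=> *; T4_auto.
Qed.

Lemma T4_lcomm g s : T4 g -> T4 (lcomm g s).
Proof.
elim: s g => [|x s IH] g Tg //=; apply: IH.
by apply: ideal2_add; [apply: ideal2_mulr | apply: ideal2_opp; apply: ideal2_mull].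
Qed.

Section AlternatingUnderPermutations.
Variables (I : ZX -> Prop) (I_ideal : is_ideal I) (n : nat).
Variable f : ('I_n -> nat) -> ZX.
Hypothesis f_ext : forall i j, i =1 j -> f i = f j.

Definition alternating_for (s : 'S_n) := forall i, I (f i - sgn s * f (i \o s)).

Lemma sgnM (s t : 'S_n) : sgn (s * t)%g = sgn t * sgn s.
Proof. by rewrite /sgn odd_permM addbC; exact: signr_addb. Qed.

Lemma alternating_for1 : alternating_for 1%g.
Proof.
move=> i; rewrite /sgn odd_perm1 mul1r (f_ext (j := i)) ?subrr; first exact: (is_ideal0 I_ideal).
by move=> x /=; rewrite perm1.
Qed.

Lemma alternating_forM s t :
  alternating_for s -> alternating_for t -> alternating_for (s * t)%g.
Proof.
move=> As At i; rewrite sgnM (f_ext (_ : i \o (s * t)%g =1 (i \o t) \o s)); last first.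
  by move=> x /=; rewrite permM.
have -> : f i - sgn t * sgn s * f (i \o t \o s) =
    (f i - sgn t * f (i \o t)) + sgn t * (f (i \o t) - sgn s * f (i \o t \o s)).
  by nc_ring.
by apply: (is_idealD I_ideal); [exact: At | apply: (is_idealMl I_ideal); exact: As].
Qed.

Lemma alternating_for_tperm x y :
  x != y -> (forall i, I (f i + f (i \o tperm x y))) -> alternating_for (tperm x y).
Proof. by move=> xy H i; rewrite /sgn odd_tperm xy mulN1r opprK. Qed.

(* adjacent transpositions generate [S_n] *)
Lemma alternating_for_all :
  (forall x y : 'I_n, val y = (val x).+1 -> forall i, I (f i + f (i \o tperm x y))) ->
  forall s, alternating_for s.
Proof.
move=> Hadj.
have Aadj (x y : 'I_n) : val y = (val x).+1 -> alternating_for (tperm x y).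
  move=> Ey; apply: alternating_for_tperm; last exact: Hadj.
  by rewrite -val_eqE Ey (ltn_eqF (ltnSn _)).
have Atp d (x y : 'I_n) : val y = (val x + d)%N -> alternating_for (tperm x y).
  elim: d x y => [|d IH] x y Ey.
    have -> : y = x by apply: val_inj; rewrite Ey addn0.
    rewrite tperm1; exact: alternating_for1.
  have lt_y' : (x + d < n)%N by move: (ltn_ord y); rewrite Ey addnS => /ltnW.
  pose y' := Ordinal lt_y'.
  have Ey' : val y = (val y').+1 by rewrite Ey /= addnS.
  have [xy'|nxy'] := eqVneq x y'; first by apply: Aadj; rewrite Ey' -xy'.
  have -> : tperm x y = (tperm y' y * (tperm x y' * tperm y' y))%g.
    have ny'x : y' != x by rewrite eq_sym.
    have nyx : y != x by rewrite -val_eqE Ey' /= eq_sym (ltn_eqF _) // ltnS leq_addr.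
    by have := tpermJ x y' (tperm y' y); rewrite /conjg tpermV (tpermD ny'x nyx) tpermL.
  apply: alternating_forM; first exact: Aadj.
  apply: alternating_forM; last exact: Aadj.
  exact: IH.
move=> s; have [ts -> _] := prod_tpermP s.
elim: ts => [|[x y] ts IH]; first by rewrite big_nil; exact: alternating_for1.
rewrite big_cons /=; apply: alternating_forM; last exact: IH.
have [le_xy|lt_yx] := leqP x y; first by apply: (Atp (y - x)%N); rewrite subnKC.
by rewrite tpermC; apply: (Atp (x - y)%N); rewrite subnKC // ltnW.
Qed.

End AlternatingUnderPermutations.

Lemma tperm_inord n (x y : 'I_n.+1) k : (k < n.+1)%N ->
  tperm x y (inord k) =
  inord (if k == x :> nat then y : nat else if k == y :> nat then x : nat else k).
Proof.
move=> lt_k; apply: val_inj.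
have vk : val (inord k : 'I_n.+1) = k := inordK lt_k.
rewrite [in RHS]/= inordK; last by case: ifP => _; [|case: ifP => _]; rewrite ?ltn_ord.
case: tpermP => [E|E|nx ny].
- by rewrite -vk E eqxx.
- by rewrite -vk E eqxx; case: ifP => // /eqP ->.
- have -> : (k == val x) = false by apply/negP => /eqP h; apply: nx; apply: val_inj; rewrite vk.
  by have -> : (k == val y) = false by apply/negP => /eqP h; apply: ny; apply: val_inj; rewrite vk.
Qed.

Lemma p23E i : p23 i = prod23 (xv (i (inord 0))) (xv (i (inord 1)))
  (xv (i (inord 2))) (xv (i (inord 3))) (xv (i (inord 4))).
Proof. by []. Qed.

Lemma p222E i : p222 i = prod222 (xv (i (inord 0))) (xv (i (inord 1)))
  (xv (i (inord 2))) (xv (i (inord 3))) (xv (i (inord 4))) (xv (i (inord 5))).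
Proof. by []. Qed.

Lemma p33E i : p33 i = prod33 (xv (i (inord 0))) (xv (i (inord 1)))
  (xv (i (inord 2))) (xv (i (inord 3))) (xv (i (inord 4))) (xv (i (inord 5))).
Proof. by []. Qed.

Lemma p23_alternating (I : ZX -> Prop) : is_ideal I ->
  (forall a b c d e, I (prod23_sw23 a b c d e)) ->
  (forall a b c d e, I (prod23_sw45 a b c d e)) ->
  forall s : 'S_5, alternating_for I p23 s.
Proof.
move=> I_ideal I23 I45.
have zero a b (E : a = - b) : I (a + b) by rewrite E addNr; exact: (is_ideal0 I_ideal).
apply: (alternating_for_all I_ideal) => [i j ij | [x lt_x] [y lt_y] /= Ey i].
  by rewrite !p23E !ij.
subst y; rewrite !p23E /= !tperm_inord //=; move: lt_y.
case: x lt_x => [|[|[|[|x]]]] _ lt_y /=.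
- by apply: zero; comm_ring.
- exact: I23.
- by apply: zero; comm_ring.
- exact: I45.
- by [].
Qed.

Lemma p222_alternating (I : ZX -> Prop) : is_ideal I ->
  (forall a b c d e f, I (prod222_sw23 a b c d e f)) ->
  (forall a b c d e f, I (prod222_sw45 a b c d e f)) ->
  forall s : 'S_6, alternating_for I p222 s.
Proof.
move=> I_ideal I23 I45.
have zero a b (E : a = - b) : I (a + b) by rewrite E addNr; exact: (is_ideal0 I_ideal).
apply: (alternating_for_all I_ideal) => [i j ij | [x lt_x] [y lt_y] /= Ey i].
  by rewrite !p222E !ij.
subst y; rewrite !p222E /= !tperm_inord //=; move: lt_y.
case: x lt_x => [|[|[|[|[|x]]]]] _ lt_y /=.
- by apply: zero; comm_ring.
- exact: I23.
- by apply: zero; comm_ring.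
- exact: I45.
- by apply: zero; comm_ring.
- by [].
Qed.

Lemma T4_Gens f : Gens f -> T4 f.
Proof.
case=> [[i1 [[|x1 [|x2 [|x3 s]]] [//= _ ->]]]|[[i ->]|[[i [s ->]]|[i [s ->]]]]].
- by apply: T4_lcomm; exact: T4_comm4.
- by rewrite p33E; exact: T4_prod33.
- by apply: p23_alternating; [exact: T4_ideal | exact: T4_prod23_sw23 | exact: T4_prod23_sw45].
- by apply: p222_alternating;
    [exact: T4_ideal | exact: T4_prod222_sw23 | exact: T4_prod222_sw45].
Qed.

Definition xmon (s : seq nat) : ZX := foldr (fun i acc => xv i * acc) 1 s.

Lemma xmon_cat s t : xmon (s ++ t) = xmon s * xmon t.
Proof. by elim: s => [|i s IH] /=; [rewrite mul1r | rewrite IH mulrA]. Qed.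

Lemma malgUM (k1 k2 : {fmonom nat}) : (<< k1 >> : ZX) * << k2 >> = << mmul k1 k2 >>.
Proof. by rewrite malgM_def fgmulUU mulr1. Qed.

Lemma malg_xmon (s : seq nat) : (<< FMonom s >> : ZX) = xmon s.
Proof.
elim: s => [|i s IH] /=; first by rewrite -fmoneE.
rewrite -IH /xv malgUM; congr << _ >>.
by apply/eqP; rewrite fmP fmM fmU.
Qed.

Lemma ZX_xmon_ind (P : ZX -> Prop) :
  P 0 -> (forall x y, P x -> P y -> P (x + y)) -> (forall x, P x -> P (- x)) ->
  (forall s, P (xmon s)) -> forall x, P x.
Proof.
move=> P0 PD PN Pmon x; rewrite (monalgE x); apply: (big_ind P) => // k _.
have Pmulz y (c : int) : P y -> P (y *~ c).
  move=> Py; have Pmuln m : P (y *+ m).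
    by elim: m => [|m IH]; [rewrite mulr0n | rewrite mulrS; apply: PD].
  by case: c => m; [apply: Pmuln | rewrite NegzE mulrNz; apply/PN/Pmuln].
have -> : << x@_k *g k >> = (<< k >> : ZX) *~ x@_k.
  by rewrite -[x@_k in LHS]intz -raddfMz.
by apply: Pmulz; rewrite -(fmK k) malg_xmon.
Qed.

Local Notation L := (lideal Gens).

Lemma lideal_is_ideal_of_right_letter :
  (forall a j, L a -> L (a * xv j)) -> is_ideal L.
Proof.
move=> Lright; split; [exact: lideal_0 | exact: lideal_add | exact: lideal_opp
  | exact: lideal_mull |].
move=> r a La; elim/ZX_xmon_ind: r.
- by rewrite mulr0; exact: lideal_0.
- by move=> x y Lx Ly; rewrite mulrDr; exact: lideal_add.
- by move=> x Lx; rewrite mulrN; exact: lideal_opp.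
- move=> s; elim: s a La => [|j s IH] a La /=; first by rewrite mulr1.
  by rewrite mulrA; apply: IH; apply: Lright.
Qed.

Definition lcomm_of_letters (g : ZX) :=
  exists i1 s, (3 <= size s)%N /\ g = lcomm (xv i1) (map xv s).

Lemma lideal_lcomm_of_letters g : lcomm_of_letters g -> L g.
Proof. by move=> Hg; apply: lideal_gen; left. Qed.

Lemma lcomm_of_letters_comm g j : lcomm_of_letters g -> lcomm_of_letters (comm g (xv j)).
Proof.
case=> i1 [s [size_s ->]]; exists i1, (rcons s j); split; first by rewrite size_rcons ltnW.
by rewrite map_rcons /lcomm -cats1 foldl_cat.
Qed.

Lemma lideal_lcomm_of_letters_mulr g r : lcomm_of_letters g -> L (g * r).
Proof.
move=> Hg; elim/ZX_xmon_ind: r.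
- by rewrite mulr0; exact: lideal_0.
- by move=> x y Lx Ly; rewrite mulrDr; exact: lideal_add.
- by move=> x Lx; rewrite mulrN; exact: lideal_opp.
move=> s; elim: s g Hg => [|j s IH] g Hg /=; first by rewrite mulr1; exact: lideal_lcomm_of_letters.
have -> : g * (xv j * xmon s) = xv j * (g * xmon s) + comm g (xv j) * xmon s.
  by rewrite /comm mulrBl !mulrA addrC subrK.
by apply: lideal_add; [apply/lideal_mull/IH | apply/IH/lcomm_of_letters_comm].
Qed.

Ltac lcomm_of_letters_tac :=
  lazymatch goal with |- lcomm_of_letters (lcomm (xv ?a) (map xv ?s)) =>
    by exists a, s end.

Ltac Gens_auto :=
  first [ exact_hyp | lazymatch goal with
  | |- lideal _ (_ + _) => apply: lideal_add; [Gens_auto | Gens_auto]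
  | |- lideal _ (- _) => apply: lideal_opp; Gens_auto
  | |- lideal _ (lcomm _ _) => apply: lideal_lcomm_of_letters; lcomm_of_letters_tac
  | |- lideal _ (_ * _) =>
      first [ apply: lideal_lcomm_of_letters_mulr; lcomm_of_letters_tac
            | apply: lideal_mull; Gens_auto ]
  end ].

Lemma lideal_p23_tperm (i : 'I_5 -> nat) (x y : 'I_5) :
  x != y -> L (p23 i + p23 (i \o tperm x y)).
Proof.
move=> xy; apply: lideal_gen; right; right; left; exists i, (tperm x y).
by rewrite /sgn odd_tperm xy mulN1r opprK.
Qed.

Lemma lideal_p222_tperm (i : 'I_6 -> nat) (x y : 'I_6) :
  x != y -> L (p222 i + p222 (i \o tperm x y)).
Proof.
move=> xy; apply: lideal_gen; right; right; right; exists i, (tperm x y).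
by rewrite /sgn odd_tperm xy mulN1r opprK.
Qed.

Lemma lideal_prod23_sw23 a b c d e : L (prod23_sw23 (xv a) (xv b) (xv c) (xv d) (xv e)).
Proof.
have := @lideal_p23_tperm (fun k => nth 0%N [:: a; b; c; d; e] k) (inord 1) (inord 2).
rewrite -val_eqE /= !inordK // !p23E /= !tperm_inord //= !inordK //.
by move=> /(_ isT) /= L23; exact: L23.
Qed.

Lemma lideal_prod23_sw45 a b c d e : L (prod23_sw45 (xv a) (xv b) (xv c) (xv d) (xv e)).
Proof.
have := @lideal_p23_tperm (fun k => nth 0%N [:: a; b; c; d; e] k) (inord 3) (inord 4).
rewrite -val_eqE /= !inordK // !p23E /= !tperm_inord //= !inordK //.
by move=> /(_ isT) /= L45; exact: L45.
Qed.

Lemma lideal_prod222_sw23 a b c d e f :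
  L (prod222_sw23 (xv a) (xv b) (xv c) (xv d) (xv e) (xv f)).
Proof.
have := @lideal_p222_tperm (fun k => nth 0%N [:: a; b; c; d; e; f] k) (inord 1) (inord 2).
rewrite -val_eqE /= !inordK // !p222E /= !tperm_inord //= !inordK //.
by move=> /(_ isT) /= L23; exact: L23.
Qed.

Lemma lideal_prod222_sw45 a b c d e f :
  L (prod222_sw45 (xv a) (xv b) (xv c) (xv d) (xv e) (xv f)).
Proof.
have := @lideal_p222_tperm (fun k => nth 0%N [:: a; b; c; d; e; f] k) (inord 3) (inord 4).
rewrite -val_eqE /= !inordK // !p222E /= !tperm_inord //= !inordK //.
by move=> /(_ isT) /= L45; exact: L45.
Qed.

Lemma lideal_prod33 a b c d e f : L (prod33 (xv a) (xv b) (xv c) (xv d) (xv e) (xv f)).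
Proof.
apply: lideal_gen; right; left; exists (fun k => nth 0%N [:: a; b; c; d; e; f] k).
by rewrite p33E /= !inordK.
Qed.

Lemma lideal_comm_prod33 a b c d e f x :
  L (comm (prod33 (xv a) (xv b) (xv c) (xv d) (xv e) (xv f)) (xv x)).
Proof.
have -> : comm (prod33 (xv a) (xv b) (xv c) (xv d) (xv e) (xv f)) (xv x) =
    lcomm (xv a) (map xv [:: b; c; x]) * comm3 (xv d) (xv e) (xv f)
    + comm3 (xv a) (xv b) (xv c) * lcomm (xv d) (map xv [:: e; f; x])
  by comm_ring.
Gens_auto.
Qed.

Lemma lideal_comm_prod23 a b c d e x :
  L (comm (prod23 (xv a) (xv b) (xv c) (xv d) (xv e)) (xv x)).
Proof.
have := lideal_prod33 a b x c d e.
have -> : comm (prod23 (xv a) (xv b) (xv c) (xv d) (xv e)) (xv x) =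
    prod33 (xv a) (xv b) (xv x) (xv c) (xv d) (xv e)
    + lcomm (xv c) (map xv [:: d; e; x]) * comm (xv a) (xv b)
    - lcomm (xv c) (map xv [:: d; e; x; a; b]) + lcomm (xv c) (map xv [:: d; e; x; b; a])
  by comm_ring.
move=> *; Gens_auto.
Qed.

Lemma lideal_comm_prod222 a b c d e f x :
  L (comm (prod222 (xv a) (xv b) (xv c) (xv d) (xv e) (xv f)) (xv x)).
Proof.
have := lideal_prod23_sw23 e f a b x; have := lideal_prod23_sw23 a e b f x.
have := lideal_prod23_sw23 e f c d x; have := lideal_prod23_sw23 c e d f x.
have := lideal_prod23_sw45 c d f x e; have := lideal_prod23_sw45 c d e x f.
have -> : comm (prod222 (xv a) (xv b) (xv c) (xv d) (xv e) (xv f)) (xv x) =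
    lcomm (xv a) (map xv [:: b; x; c; d]) * comm (xv e) (xv f)
  - lcomm (xv a) (map xv [:: b; x; d; c]) * comm (xv e) (xv f)
  + comm (xv c) (xv d) * (lcomm (xv a) (map xv [:: b; x; e; f])
                          - lcomm (xv a) (map xv [:: b; x; f; e]))
  + comm (xv a) (xv b) * (lcomm (xv c) (map xv [:: d; x; e; f])
                          - lcomm (xv c) (map xv [:: d; x; f; e]))
  + comm (xv c) (xv d) * (prod23_sw23 (xv e) (xv f) (xv a) (xv b) (xv x)
                          - prod23_sw23 (xv a) (xv e) (xv b) (xv f) (xv x))
  + lcomm (xv c) (map xv [:: d; a; b]) * comm3 (xv e) (xv f) (xv x)
  - lcomm (xv c) (map xv [:: d; b; a]) * comm3 (xv e) (xv f) (xv x)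
  + comm (xv a) (xv b) * (prod23_sw23 (xv e) (xv f) (xv c) (xv d) (xv x)
                          - prod23_sw23 (xv c) (xv e) (xv d) (xv f) (xv x))
  - comm (xv a) (xv b) * prod23_sw45 (xv c) (xv d) (xv f) (xv x) (xv e)
  + comm (xv a) (xv b) * prod23_sw45 (xv c) (xv d) (xv e) (xv x) (xv f)
  by comm_ring.
move=> *; Gens_auto.
Qed.

Lemma sgn_comm n (s : 'S_n) x : sgn s * x = x * sgn s.
Proof. by rewrite /sgn; case: odd_perm; rewrite ?expr1 ?expr0 ?mulN1r ?mulrN1 ?mul1r ?mulr1. Qed.

Lemma mulr_alt_comm (A B s x : ZX) : s * x = x * s ->
  (A - s * B) * x = x * (A - s * B) + comm A x - s * comm B x.
Proof.
move=> sx; apply/eqP; rewrite -subr_eq0; apply/eqP.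
transitivity (x * s * B - s * x * B); first by rewrite /comm; nc_ring.
by rewrite sx subrr.
Qed.

Lemma lideal_Gens_mulr f j : Gens f -> L (f * xv j).
Proof.
case=> [[i1 [s [size_s ->]]]|[[i ->]|[[i [s ->]]|[i [s ->]]]]].
- by apply: lideal_lcomm_of_letters_mulr; exists i1, s.
- have -> : p33 i * xv j = xv j * p33 i + comm (p33 i) (xv j) by rewrite /comm addrC subrK.
  apply: lideal_add; first by apply/lideal_mull/lideal_gen; right; left; exists i.
  by rewrite p33E; exact: lideal_comm_prod33.
- have Lc k : L (comm (p23 k) (xv j)) by rewrite p23E; exact: lideal_comm_prod23.
  rewrite mulr_alt_comm; last exact: sgn_comm.
  apply: lideal_add; first apply: lideal_add.
  + by apply/lideal_mull/lideal_gen; right; right; left; exists i, s.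
  + exact: Lc.
  + by apply/lideal_opp/lideal_mull/Lc.
- have Lc k : L (comm (p222 k) (xv j)) by rewrite p222E; exact: lideal_comm_prod222.
  rewrite mulr_alt_comm; last exact: sgn_comm.
  apply: lideal_add; first apply: lideal_add.
  + by apply/lideal_mull/lideal_gen; right; right; right; exists i, s.
  + exact: Lc.
  + by apply/lideal_opp/lideal_mull/Lc.
Qed.

Lemma lideal_Gens_ideal : is_ideal L.
Proof.
apply: lideal_is_ideal_of_right_letter => a j.
elim=> [f Gf||b c _ Lb _ Lc|b _ Lb|r b _ Lb].
- exact: lideal_Gens_mulr.
- by rewrite mul0r; exact: lideal_0.
- by rewrite mulrDl; exact: lideal_add.
- by rewrite mulNr; exact: lideal_opp.
- by rewrite -mulrA; exact: lideal_mull.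
Qed.

Definition nword := (nat * seq nat)%type.
Definition wv (w : nword) : ZX := xmon (w.1 :: w.2).
(* [simpl never] keeps [comm_ring] from expanding words into letters *)
Arguments wv : simpl never.
Definition wsize (w : nword) : nat := (size w.2).+1.
Definition wcat (w w' : nword) : nword := (w.1, w.2 ++ w'.1 :: w'.2).

Lemma wv_cat u v : wv (wcat u v) = wv u * wv v.
Proof. by rewrite /wv /= xmon_cat /= mulrA. Qed.

Lemma wsize_cat u v : wsize (wcat u v) = (wsize u + wsize v)%N.
Proof. by rewrite /wsize /= size_cat /=; lia. Qed.

Lemma wv_cons a0 a1 a : wv (a0, a1 :: a) = wv (a0, [::]) * wv (a1, a).
Proof. by rewrite -wv_cat. Qed.

Lemma wv_letter a : wv (a, [::]) = xv a.
Proof. by rewrite /wv /= mulr1. Qed.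

Definition comm4_upto (I : ZX -> Prop) m := forall a b c d : nword,
  (wsize a + wsize b + wsize c + wsize d <= m)%N -> I (comm4 (wv a) (wv b) (wv c) (wv d)).

Definition prod33_upto (I : ZX -> Prop) m := forall a b c d e f : nword,
  (wsize a + wsize b + wsize c + wsize d + wsize e + wsize f <= m)%N ->
  I (prod33 (wv a) (wv b) (wv c) (wv d) (wv e) (wv f)).

Definition prod23_sw_upto (I : ZX -> Prop) m := forall a b c d e : nword,
  (wsize a + wsize b + wsize c + wsize d + wsize e <= m)%N ->
  I (prod23_sw23 (wv a) (wv b) (wv c) (wv d) (wv e)) /\
  I (prod23_sw45 (wv a) (wv b) (wv c) (wv d) (wv e)).

Definition prod222_sw_upto (I : ZX -> Prop) m := forall a b c d e f : nword,
  (wsize a + wsize b + wsize c + wsize d + wsize e + wsize f <= m)%N ->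
  I (prod222_sw23 (wv a) (wv b) (wv c) (wv d) (wv e) (wv f)) /\
  I (prod222_sw45 (wv a) (wv b) (wv c) (wv d) (wv e) (wv f)).

Definition leibniz_defect (F : ZX -> ZX) (u v : ZX) := F (u * v) - u * F v - F u * v.

Lemma ideal_eq_mem (I : ZX -> Prop) y x : x = y -> I y -> I x.
Proof. by move=> ->. Qed.
Arguments ideal_eq_mem {I} y {x}.

Section LeibnizRule.
Variables (I : ZX -> Prop) (I_ideal : is_ideal I).

Lemma ideal_leibniz F u v :
  I (leibniz_defect F u v) -> I (F u) -> I (F v) -> I (F (u * v)).
Proof.
move=> *; apply: (ideal_eq_mem (leibniz_defect F u v + u * F v + F u * v)).
  by rewrite /leibniz_defect; nc_ring.
ideal_auto I_ideal.
Qed.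

Lemma ideal_leibniz_add F G u v :
  I (leibniz_defect F u v) -> I (leibniz_defect G u v) ->
  I (F u + G u) -> I (F v + G v) -> I (F (u * v) + G (u * v)).
Proof.
move=> *; apply: (ideal_eq_mem
  (leibniz_defect F u v + leibniz_defect G u v + u * (F v + G v) + (F u + G u) * v)).
  by rewrite /leibniz_defect; nc_ring.
ideal_auto I_ideal.
Qed.

Lemma ideal_leibniz_add_corr F G u v w1 w2 :
  I (leibniz_defect F u v + w1 *+ 2) -> I (leibniz_defect G u v + w2 *+ 2) -> I (w1 + w2) ->
  I (F u + G u) -> I (F v + G v) -> I (F (u * v) + G (u * v)).
Proof.
move=> *; apply: (ideal_eq_mem ((leibniz_defect F u v + w1 *+ 2)
  + (leibniz_defect G u v + w2 *+ 2) - (w1 + w2) *+ 2 + u * (F v + G v) + (F u + G u) * v)).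
  by rewrite /leibniz_defect; nc_ring.
ideal_auto I_ideal.
Qed.

Lemma ideal_subr_mem x y : I (x - y) -> I y -> I x.
Proof. by move=> Ixy Iy; rewrite -(subrK y x); apply: (is_idealD I_ideal). Qed.

End LeibnizRule.

Ltac size_tac :=
  repeat match goal with H : is_true (_ <= _)%N |- _ => move: H end;
  rewrite ?wsize_cat /wsize /=; lia.

Tactic Notation "have_mem" constr(t) :=
  let h := fresh "h" in have h := t; rewrite ?wv_cat in h.

Ltac defect_ring := rewrite /leibniz_defect; comm_ring.

Section InductionStep.
Local Unset Implicit Arguments.
Variables (I : ZX -> Prop) (I_ideal : is_ideal I) (m : nat).
Hypotheses (Hc : comm4_upto I m) (Hs : prod23_sw_upto I m).
Hypotheses (Hk : prod33_upto I m) (Hq : prod222_sw_upto I m).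
(* The families are completed at level [m.+1] in the order [prod33], [prod222], [prod23],
   [comm4]; a step may only use level [m.+1] of the families before it. *)
Hypotheses (Hs1 : prod23_sw_upto I m.+1).
Hypotheses (Hk1 : prod33_upto I m.+1) (Hq1 : prod222_sw_upto I m.+1).

Lemma mem_prod223_sw45 y1 y2 y3 y4 y5 y6 y7 :
  (wsize y1 + wsize y2 + wsize y3 + wsize y4 + wsize y5 + wsize y6 + wsize y7 <= m.+1)%N ->
  I (prod223 (wv y1) (wv y2) (wv y3) (wv y4) (wv y5) (wv y6) (wv y7)
     + prod223 (wv y1) (wv y2) (wv y3) (wv y5) (wv y4) (wv y6) (wv y7)).
Proof.
move=> le_m; have_mem (Hs y3 y4 y5 y6 y7 ltac:(size_tac)).1.
apply: (ideal_eq_mem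
  (comm (wv y1) (wv y2) * prod23_sw23 (wv y3) (wv y4) (wv y5) (wv y6) (wv y7))).
  by comm_ring.
ideal_auto I_ideal.
Qed.

Lemma mem_prod223_sw67 y1 y2 y3 y4 y5 y6 y7 :
  (wsize y1 + wsize y2 + wsize y3 + wsize y4 + wsize y5 + wsize y6 + wsize y7 <= m.+1)%N ->
  I (prod223 (wv y1) (wv y2) (wv y3) (wv y4) (wv y5) (wv y6) (wv y7)
     + prod223 (wv y1) (wv y2) (wv y3) (wv y4) (wv y5) (wv y7) (wv y6)).
Proof.
move=> le_m; have_mem (Hs y3 y4 y5 y6 y7 ltac:(size_tac)).2.
apply: (ideal_eq_mem
  (comm (wv y1) (wv y2) * prod23_sw45 (wv y3) (wv y4) (wv y5) (wv y6) (wv y7))).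
  by comm_ring.
ideal_auto I_ideal.
Qed.

Lemma mem_prod223_sw23 y1 y2 y3 y4 y5 y6 y7 :
  (wsize y1 + wsize y2 + wsize y3 + wsize y4 + wsize y5 + wsize y6 + wsize y7 <= m.+1)%N ->
  I (prod223 (wv y1) (wv y2) (wv y3) (wv y4) (wv y5) (wv y6) (wv y7)
     + prod223 (wv y1) (wv y3) (wv y2) (wv y4) (wv y5) (wv y6) (wv y7)).
Proof.
move=> le_m.
have_mem (Hs y1 y2 y5 y6 y7 ltac:(size_tac)).1.
have_mem (Hs y4 y3 y2 y6 y7 ltac:(size_tac)).1.
have_mem (Hs y1 y5 y3 y6 y7 ltac:(size_tac)).1.
have_mem (Hc y1 y2 y3 y4 ltac:(size_tac)); have_mem (Hc y1 y2 y4 y3 ltac:(size_tac)).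
have_mem (Hc y1 y5 y3 y4 ltac:(size_tac)); have_mem (Hc y1 y5 y4 y3 ltac:(size_tac)).
have_mem (Hc y1 y5 y2 y4 ltac:(size_tac)); have_mem (Hc y1 y5 y4 y2 ltac:(size_tac)).
have_mem (Hc y1 y3 y2 y4 ltac:(size_tac)); have_mem (Hc y1 y3 y4 y2 ltac:(size_tac)).
apply: (ideal_eq_mem
  (comm (wv y3) (wv y4) * prod23_sw23 (wv y1) (wv y2) (wv y5) (wv y6) (wv y7) +
   (comm4 (wv y1) (wv y2) (wv y3) (wv y4) - comm4 (wv y1) (wv y2) (wv y4) (wv y3)) *
   comm3 (wv y5) (wv y6) (wv y7) +
   (comm4 (wv y1) (wv y5) (wv y3) (wv y4) - comm4 (wv y1) (wv y5) (wv y4) (wv y3)) *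
   comm3 (wv y2) (wv y6) (wv y7) +
   (comm (wv y1) (wv y5) * prod23_sw23 (wv y4) (wv y3) (wv y2) (wv y6) (wv y7)) +
   (comm (wv y2) (wv y4) * prod23_sw23 (wv y1) (wv y5) (wv y3) (wv y6) (wv y7) +
    (comm4 (wv y1) (wv y5) (wv y2) (wv y4) - comm4 (wv y1) (wv y5) (wv y4) (wv y2)) *
    comm3 (wv y3) (wv y6) (wv y7) +
    (comm4 (wv y1) (wv y3) (wv y2) (wv y4) - comm4 (wv y1) (wv y3) (wv y4) (wv y2)) *
    comm3 (wv y5) (wv y6) (wv y7)))).
  by comm_ring.
ideal_auto I_ideal.
Qed.

Lemma mem_prod33_swap a b c d e f :
  (wsize a + wsize b + wsize c + wsize d + wsize e + wsize f <= m.+1)%N ->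
  I (prod33 (wv a) (wv b) (wv c) (wv d) (wv e) (wv f)
     - prod33 (wv d) (wv e) (wv f) (wv a) (wv b) (wv c)).
Proof.
move=> le_m.
have_mem (Hc a b c (wcat d e) ltac:(size_tac)); have_mem (Hc a b c (wcat e d) ltac:(size_tac)).
have_mem (Hc a b c f ltac:(size_tac)).
apply: (ideal_eq_mem
  ((comm4 (wv a) (wv b) (wv c) (wv d * wv e) - comm4 (wv a) (wv b) (wv c) (wv e * wv d)) *
   wv f -
   wv f *
   (comm4 (wv a) (wv b) (wv c) (wv d * wv e) - comm4 (wv a) (wv b) (wv c) (wv e * wv d)) +
   comm (wv d) (wv e) * comm4 (wv a) (wv b) (wv c) (wv f) -
   comm4 (wv a) (wv b) (wv c) (wv f) * comm (wv d) (wv e))).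
  by comm_ring.
ideal_auto I_ideal.
Qed.

Lemma prod33_defect1 U V B C D E F :
  (wsize U + wsize V + wsize B + wsize C + wsize D + wsize E + wsize F <= m.+1)%N ->
  I (leibniz_defect (fun x => prod33 x (wv B) (wv C) (wv D) (wv E) (wv F)) (wv U) (wv V)).
Proof.
move=> le_m; have_mem (Hc D E F V ltac:(size_tac)).
have_mem (mem_prod223_sw23 U C V B D E F ltac:(size_tac)).
have_mem (mem_prod223_sw23 U V B C D E F ltac:(size_tac)).
apply: (ideal_eq_mem
  (prod223 (wv U) (wv C) (wv V) (wv B) (wv D) (wv E) (wv F) +
   prod223 (wv U) (wv V) (wv C) (wv B) (wv D) (wv E) (wv F) +
   (prod223 (wv U) (wv V) (wv B) (wv C) (wv D) (wv E) (wv F) +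
    prod223 (wv U) (wv B) (wv V) (wv C) (wv D) (wv E) (wv F)) -
   comm3 (wv U) (wv B) (wv C) * comm4 (wv D) (wv E) (wv F) (wv V))).
  by defect_ring.
ideal_auto I_ideal.
Qed.

Lemma prod33_defect2 A U V C D E F :
  (wsize A + wsize U + wsize V + wsize C + wsize D + wsize E + wsize F <= m.+1)%N ->
  I (leibniz_defect (fun x => prod33 (wv A) x (wv C) (wv D) (wv E) (wv F)) (wv U) (wv V)).
Proof.
move=> le_m; have_mem (prod33_defect1 U V A C D E F ltac:(size_tac)).
apply: (ideal_eq_mem
  (- leibniz_defect (fun x : ZX => prod33 x (wv A) (wv C) (wv D) (wv E) (wv F))
       (wv U) (wv V))).
  by defect_ring.
ideal_auto I_ideal.
Qed.

Lemma prod33_defect3 A B U V D E F :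
  (wsize A + wsize B + wsize U + wsize V + wsize D + wsize E + wsize F <= m.+1)%N ->
  I (leibniz_defect (fun x => prod33 (wv A) (wv B) x (wv D) (wv E) (wv F)) (wv U) (wv V)).
Proof.
move=> le_m; have_mem (Hc D E F V ltac:(size_tac)).
apply: (ideal_eq_mem
  (- (comm3 (wv A) (wv B) (wv U) * comm4 (wv D) (wv E) (wv F) (wv V)))).
  by defect_ring.
ideal_auto I_ideal.
Qed.

Hypothesis prod33_letters : forall a b c d e f : nat,
  I (prod33 (xv a) (xv b) (xv c) (xv d) (xv e) (xv f)).

Lemma prod33_slot1 U V B C D E F :
  (wsize U + wsize V + wsize B + wsize C + wsize D + wsize E + wsize F <= m.+1)%N ->
  I (prod33 (wv U * wv V) (wv B) (wv C) (wv D) (wv E) (wv F)).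
Proof.
move=> le_m; apply: (ideal_leibniz I_ideal (prod33_defect1 U V B C D E F le_m)).
  by apply: Hk; size_tac.
by apply: Hk; size_tac.
Qed.

Lemma prod33_slot2 A U V C D E F :
  (wsize A + wsize U + wsize V + wsize C + wsize D + wsize E + wsize F <= m.+1)%N ->
  I (prod33 (wv A) (wv U * wv V) (wv C) (wv D) (wv E) (wv F)).
Proof.
move=> le_m; apply: (ideal_leibniz I_ideal (prod33_defect2 A U V C D E F le_m)).
  by apply: Hk; size_tac.
by apply: Hk; size_tac.
Qed.

Lemma prod33_slot3 A B U V D E F :
  (wsize A + wsize B + wsize U + wsize V + wsize D + wsize E + wsize F <= m.+1)%N ->
  I (prod33 (wv A) (wv B) (wv U * wv V) (wv D) (wv E) (wv F)).
Proof.
move=> le_m; apply: (ideal_leibniz I_ideal (prod33_defect3 A B U V D E F le_m)).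
  by apply: Hk; size_tac.
by apply: Hk; size_tac.
Qed.

Lemma prod33_upto_step : prod33_upto I m.+1.
Proof.
have swap a b c d e f : (wsize a + wsize b + wsize c + wsize d + wsize e + wsize f <= m.+1)%N ->
    I (prod33 (wv d) (wv e) (wv f) (wv a) (wv b) (wv c)) ->
    I (prod33 (wv a) (wv b) (wv c) (wv d) (wv e) (wv f)).
  by move=> le_m; apply/(ideal_subr_mem I_ideal)/mem_prod33_swap.
move=> a b c d e f le_m; case: a le_m => a0 [|a1 a] le_m;
  last by rewrite wv_cons; apply: prod33_slot1; size_tac.
case: b le_m => b0 [|b1 b] le_m;
  last by rewrite wv_cons; apply: prod33_slot2; size_tac.
case: c le_m => c0 [|c1 c] le_m;
  last by rewrite wv_cons; apply: prod33_slot3; size_tac.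
case: d le_m => d0 [|d1 d] le_m;
  last by apply: swap => //; rewrite wv_cons; apply: prod33_slot1; size_tac.
case: e le_m => e0 [|e1 e] le_m;
  last by apply: swap => //; rewrite wv_cons; apply: prod33_slot2; size_tac.
case: f le_m => f0 [|f1 f] le_m;
  last by apply: swap => //; rewrite wv_cons; apply: prod33_slot3; size_tac.
by rewrite !wv_letter; apply: prod33_letters.
Qed.

Lemma prod222_defect1 U V B C D E F :
  (wsize U + wsize V + wsize B + wsize C + wsize D + wsize E + wsize F <= m.+1)%N ->
  I (leibniz_defect (fun x => prod222 x (wv B) (wv C) (wv D) (wv E) (wv F)) (wv U) (wv V)
     + prod223 (wv U) (wv B) (wv C) (wv D) (wv E) (wv F) (wv V) *+ 2).
Proof.
move=> le_m.
have_mem (Hc C D V (wcat E F) ltac:(size_tac)); have_mem (Hc C D V (wcat F E) ltac:(size_tac)).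
have_mem (mem_prod223_sw45 U B E F C D V ltac:(size_tac)).
have_mem (mem_prod223_sw45 U B C E D F V ltac:(size_tac)).
apply: (ideal_eq_mem
  (- (prod223 (wv U) (wv B) (wv E) (wv F) (wv C) (wv D) (wv V) +
      prod223 (wv U) (wv B) (wv E) (wv C) (wv F) (wv D) (wv V) -
      (prod223 (wv U) (wv B) (wv C) (wv E) (wv D) (wv F) (wv V) +
       prod223 (wv U) (wv B) (wv C) (wv D) (wv E) (wv F) (wv V))) -
   comm (wv U) (wv B) *
   (comm4 (wv C) (wv D) (wv V) (wv E * wv F) - comm4 (wv C) (wv D) (wv V) (wv F * wv E)))).
  by defect_ring.
ideal_auto I_ideal.
Qed.

Lemma prod222_defect3 A B U V D E F :
  (wsize A + wsize B + wsize U + wsize V + wsize D + wsize E + wsize F <= m.+1)%N ->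
  I (leibniz_defect (fun x => prod222 (wv A) (wv B) x (wv D) (wv E) (wv F)) (wv U) (wv V)
     + prod223 (wv A) (wv B) (wv U) (wv D) (wv E) (wv F) (wv V) *+ 2).
Proof.
move=> le_m.
have_mem (Hc A B U (wcat V D) ltac:(size_tac)); have_mem (Hc A B U (wcat D V) ltac:(size_tac)).
have_mem (Hc A B U (wcat E F) ltac:(size_tac)); have_mem (Hc A B U (wcat F E) ltac:(size_tac)).
have_mem (mem_prod223_sw23 D V E F A B U ltac:(size_tac)).
have_mem (mem_prod223_sw45 D E F V A B U ltac:(size_tac)).
have_mem (mem_prod223_sw67 D E F A B V U ltac:(size_tac)).
have_mem (mem_prod223_sw45 D E A F B U V ltac:(size_tac)).
have_mem (mem_prod223_sw23 D E A B U F V ltac:(size_tac)).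
have_mem (mem_prod223_sw45 D A B E U F V ltac:(size_tac)).
have_mem (mem_prod223_sw23 A D B U E F V ltac:(size_tac)).
apply: (ideal_eq_mem
  (- (prod223 (wv D) (wv V) (wv E) (wv F) (wv A) (wv B) (wv U) +
      prod223 (wv D) (wv E) (wv V) (wv F) (wv A) (wv B) (wv U)) -
   (prod223 (wv D) (wv E) (wv F) (wv V) (wv A) (wv B) (wv U) +
    prod223 (wv D) (wv E) (wv F) (wv A) (wv V) (wv B) (wv U)) -
   (prod223 (wv D) (wv E) (wv F) (wv A) (wv B) (wv V) (wv U) +
    prod223 (wv D) (wv E) (wv F) (wv A) (wv B) (wv U) (wv V)) -
   (prod223 (wv D) (wv E) (wv A) (wv F) (wv B) (wv U) (wv V) +
    prod223 (wv D) (wv E) (wv A) (wv B) (wv F) (wv U) (wv V)) -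
   (prod223 (wv D) (wv E) (wv A) (wv B) (wv U) (wv F) (wv V) +
    prod223 (wv D) (wv A) (wv E) (wv B) (wv U) (wv F) (wv V)) -
   (prod223 (wv D) (wv A) (wv B) (wv E) (wv U) (wv F) (wv V) +
    prod223 (wv D) (wv A) (wv B) (wv U) (wv E) (wv F) (wv V)) -
   (prod223 (wv A) (wv D) (wv B) (wv U) (wv E) (wv F) (wv V) +
    prod223 (wv A) (wv B) (wv D) (wv U) (wv E) (wv F) (wv V)) +
   (comm4 (wv A) (wv B) (wv U) (wv V * wv D) - comm4 (wv A) (wv B) (wv U) (wv D * wv V)) *
   comm (wv E) (wv F) +
   comm (wv V) (wv D) *
   (comm4 (wv A) (wv B) (wv U) (wv E * wv F) - comm4 (wv A) (wv B) (wv U) (wv F * wv E)))).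
  by defect_ring.
ideal_auto I_ideal.
Qed.

Lemma prod222_defect5 A B C D U V F :
  (wsize A + wsize B + wsize C + wsize D + wsize U + wsize V + wsize F <= m.+1)%N ->
  I (leibniz_defect (fun x => prod222 (wv A) (wv B) (wv C) (wv D) x (wv F)) (wv U) (wv V)
     + prod223 (wv A) (wv B) (wv C) (wv D) (wv U) (wv F) (wv V) *+ 2).
Proof.
move=> le_m.
have_mem (Hc A B U (wcat C D) ltac:(size_tac)); have_mem (Hc A B U (wcat D C) ltac:(size_tac)).
have_mem (Hc A B U (wcat V F) ltac:(size_tac)); have_mem (Hc A B U (wcat F V) ltac:(size_tac)).
have_mem (Hc C D U (wcat V F) ltac:(size_tac)); have_mem (Hc C D U (wcat F V) ltac:(size_tac)).
have_mem (mem_prod223_sw45 C D F V A B U ltac:(size_tac)).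
have_mem (mem_prod223_sw67 C D F A B V U ltac:(size_tac)).
have_mem (mem_prod223_sw45 C D A F B U V ltac:(size_tac)).
have_mem (mem_prod223_sw23 C D A B U F V ltac:(size_tac)).
have_mem (mem_prod223_sw23 A C B D U F V ltac:(size_tac)).
have_mem (mem_prod223_sw45 A B F V C D U ltac:(size_tac)).
have_mem (mem_prod223_sw67 A B F C D V U ltac:(size_tac)).
have_mem (mem_prod223_sw45 A B C F D U V ltac:(size_tac)).
apply: (ideal_eq_mem
  (- (prod223 (wv C) (wv D) (wv F) (wv V) (wv A) (wv B) (wv U) +
      prod223 (wv C) (wv D) (wv F) (wv A) (wv V) (wv B) (wv U)) -
   (prod223 (wv C) (wv D) (wv F) (wv A) (wv B) (wv V) (wv U) +
    prod223 (wv C) (wv D) (wv F) (wv A) (wv B) (wv U) (wv V)) -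
   (prod223 (wv C) (wv D) (wv A) (wv F) (wv B) (wv U) (wv V) +
    prod223 (wv C) (wv D) (wv A) (wv B) (wv F) (wv U) (wv V)) -
   (prod223 (wv C) (wv D) (wv A) (wv B) (wv U) (wv F) (wv V) +
    prod223 (wv C) (wv A) (wv D) (wv B) (wv U) (wv F) (wv V)) +
   (prod223 (wv A) (wv C) (wv B) (wv D) (wv U) (wv F) (wv V) +
    prod223 (wv A) (wv B) (wv C) (wv D) (wv U) (wv F) (wv V)) +
   (comm4 (wv A) (wv B) (wv U) (wv C * wv D) - comm4 (wv A) (wv B) (wv U) (wv D * wv C)) *
   comm (wv V) (wv F) +
   comm (wv C) (wv D) *
   (comm4 (wv A) (wv B) (wv U) (wv V * wv F) - comm4 (wv A) (wv B) (wv U) (wv F * wv V)) +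
   (-
    (prod223 (wv A) (wv B) (wv F) (wv V) (wv C) (wv D) (wv U) +
     prod223 (wv A) (wv B) (wv F) (wv C) (wv V) (wv D) (wv U)) -
    (prod223 (wv A) (wv B) (wv F) (wv C) (wv D) (wv V) (wv U) +
     prod223 (wv A) (wv B) (wv F) (wv C) (wv D) (wv U) (wv V)) -
    (prod223 (wv A) (wv B) (wv C) (wv F) (wv D) (wv U) (wv V) +
     prod223 (wv A) (wv B) (wv C) (wv D) (wv F) (wv U) (wv V))) +
   comm (wv A) (wv B) *
   (comm4 (wv C) (wv D) (wv U) (wv V * wv F) - comm4 (wv C) (wv D) (wv U) (wv F * wv V)))).
  by defect_ring.
ideal_auto I_ideal.
Qed.

Lemma prod222_defect2 A U V C D E F :
  (wsize A + wsize U + wsize V + wsize C + wsize D + wsize E + wsize F <= m.+1)%N ->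
  I (leibniz_defect (fun x => prod222 (wv A) x (wv C) (wv D) (wv E) (wv F)) (wv U) (wv V)
     + prod223 (wv A) (wv U) (wv C) (wv D) (wv E) (wv F) (wv V) *+ 2).
Proof.
move=> le_m; have_mem (prod222_defect1 U V A C D E F ltac:(size_tac)).
apply: (ideal_eq_mem
  (- (leibniz_defect (fun x : ZX => prod222 x (wv A) (wv C) (wv D) (wv E) (wv F))
        (wv U) (wv V) +
      prod223 (wv U) (wv A) (wv C) (wv D) (wv E) (wv F) (wv V) *+ 2))).
  by defect_ring.
ideal_auto I_ideal.
Qed.

Lemma prod222_defect4 A B C U V E F :
  (wsize A + wsize B + wsize C + wsize U + wsize V + wsize E + wsize F <= m.+1)%N ->
  I (leibniz_defect (fun x => prod222 (wv A) (wv B) (wv C) x (wv E) (wv F)) (wv U) (wv V)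
     + prod223 (wv A) (wv B) (wv C) (wv U) (wv E) (wv F) (wv V) *+ 2).
Proof.
move=> le_m; have_mem (prod222_defect3 A B U V C E F ltac:(size_tac)).
apply: (ideal_eq_mem
  (- (leibniz_defect (fun x : ZX => prod222 (wv A) (wv B) x (wv C) (wv E) (wv F))
        (wv U) (wv V) +
      prod223 (wv A) (wv B) (wv U) (wv C) (wv E) (wv F) (wv V) *+ 2))).
  by defect_ring.
ideal_auto I_ideal.
Qed.

Lemma prod222_defect6 A B C D E U V :
  (wsize A + wsize B + wsize C + wsize D + wsize E + wsize U + wsize V <= m.+1)%N ->
  I (leibniz_defect (fun x => prod222 (wv A) (wv B) (wv C) (wv D) (wv E) x) (wv U) (wv V)
     + prod223 (wv A) (wv B) (wv C) (wv D) (wv E) (wv U) (wv V) *+ 2).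
Proof.
move=> le_m; have_mem (prod222_defect5 A B C D U V E ltac:(size_tac)).
apply: (ideal_eq_mem
  (- (leibniz_defect ((prod222 (wv A) (wv B) (wv C) (wv D))^~ (wv E)) (wv U) (wv V) +
      prod223 (wv A) (wv B) (wv C) (wv D) (wv U) (wv E) (wv V) *+ 2))).
  by defect_ring.
ideal_auto I_ideal.
Qed.

Hypothesis prod222_sw_letters : forall a b c d e f : nat,
  I (prod222_sw23 (xv a) (xv b) (xv c) (xv d) (xv e) (xv f)) /\
  I (prod222_sw45 (xv a) (xv b) (xv c) (xv d) (xv e) (xv f)).

Lemma prod222_sw_slot1 U V B C D E F :
  (wsize U + wsize V + wsize B + wsize C + wsize D + wsize E + wsize F <= m.+1)%N ->
  I (prod222_sw23 (wv U * wv V) (wv B) (wv C) (wv D) (wv E) (wv F)) /\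
  I (prod222_sw45 (wv U * wv V) (wv B) (wv C) (wv D) (wv E) (wv F)).
Proof.
move=> le_m; split.
- apply: (ideal_leibniz_add_corr I_ideal (prod222_defect1 U V B C D E F le_m)
      (prod222_defect1 U V C B D E F ltac:(size_tac))
      (mem_prod223_sw23 U B C D E F V ltac:(size_tac))).
  + exact: (Hq U B C D E F ltac:(size_tac)).1.
  + exact: (Hq V B C D E F ltac:(size_tac)).1.
- apply: (ideal_leibniz_add_corr I_ideal (prod222_defect1 U V B C D E F le_m)
      (prod222_defect1 U V B C E D F ltac:(size_tac))
      (mem_prod223_sw45 U B C D E F V ltac:(size_tac))).
  + exact: (Hq U B C D E F ltac:(size_tac)).2.
  + exact: (Hq V B C D E F ltac:(size_tac)).2.
Qed.

Lemma prod222_sw_slot2 A U V C D E F :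
  (wsize A + wsize U + wsize V + wsize C + wsize D + wsize E + wsize F <= m.+1)%N ->
  I (prod222_sw23 (wv A) (wv U * wv V) (wv C) (wv D) (wv E) (wv F)) /\
  I (prod222_sw45 (wv A) (wv U * wv V) (wv C) (wv D) (wv E) (wv F)).
Proof.
move=> le_m; split.
- apply: (ideal_leibniz_add_corr I_ideal (prod222_defect2 A U V C D E F le_m)
      (prod222_defect3 A C U V D E F ltac:(size_tac))
      (mem_prod223_sw23 A U C D E F V ltac:(size_tac))).
  + exact: (Hq A U C D E F ltac:(size_tac)).1.
  + exact: (Hq A V C D E F ltac:(size_tac)).1.
- apply: (ideal_leibniz_add_corr I_ideal (prod222_defect2 A U V C D E F le_m)
      (prod222_defect2 A U V C E D F ltac:(size_tac))
      (mem_prod223_sw45 A U C D E F V ltac:(size_tac))).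
  + exact: (Hq A U C D E F ltac:(size_tac)).2.
  + exact: (Hq A V C D E F ltac:(size_tac)).2.
Qed.

Lemma prod222_sw_slot3 A B U V D E F :
  (wsize A + wsize B + wsize U + wsize V + wsize D + wsize E + wsize F <= m.+1)%N ->
  I (prod222_sw23 (wv A) (wv B) (wv U * wv V) (wv D) (wv E) (wv F)) /\
  I (prod222_sw45 (wv A) (wv B) (wv U * wv V) (wv D) (wv E) (wv F)).
Proof.
move=> le_m; split.
- apply: (ideal_leibniz_add_corr I_ideal (prod222_defect3 A B U V D E F le_m)
      (prod222_defect2 A U V B D E F ltac:(size_tac))
      (mem_prod223_sw23 A B U D E F V ltac:(size_tac))).
  + exact: (Hq A B U D E F ltac:(size_tac)).1.
  + exact: (Hq A B V D E F ltac:(size_tac)).1.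
- apply: (ideal_leibniz_add_corr I_ideal (prod222_defect3 A B U V D E F le_m)
      (prod222_defect3 A B U V E D F ltac:(size_tac))
      (mem_prod223_sw45 A B U D E F V ltac:(size_tac))).
  + exact: (Hq A B U D E F ltac:(size_tac)).2.
  + exact: (Hq A B V D E F ltac:(size_tac)).2.
Qed.

Lemma prod222_sw_slot4 A B C U V E F :
  (wsize A + wsize B + wsize C + wsize U + wsize V + wsize E + wsize F <= m.+1)%N ->
  I (prod222_sw23 (wv A) (wv B) (wv C) (wv U * wv V) (wv E) (wv F)) /\
  I (prod222_sw45 (wv A) (wv B) (wv C) (wv U * wv V) (wv E) (wv F)).
Proof.
move=> le_m; split.
- apply: (ideal_leibniz_add_corr I_ideal (prod222_defect4 A B C U V E F le_m)
      (prod222_defect4 A C B U V E F ltac:(size_tac))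
      (mem_prod223_sw23 A B C U E F V ltac:(size_tac))).
  + exact: (Hq A B C U E F ltac:(size_tac)).1.
  + exact: (Hq A B C V E F ltac:(size_tac)).1.
- apply: (ideal_leibniz_add_corr I_ideal (prod222_defect4 A B C U V E F le_m)
      (prod222_defect5 A B C E U V F ltac:(size_tac))
      (mem_prod223_sw45 A B C U E F V ltac:(size_tac))).
  + exact: (Hq A B C U E F ltac:(size_tac)).2.
  + exact: (Hq A B C V E F ltac:(size_tac)).2.
Qed.

Lemma prod222_sw_slot5 A B C D U V F :
  (wsize A + wsize B + wsize C + wsize D + wsize U + wsize V + wsize F <= m.+1)%N ->
  I (prod222_sw23 (wv A) (wv B) (wv C) (wv D) (wv U * wv V) (wv F)) /\
  I (prod222_sw45 (wv A) (wv B) (wv C) (wv D) (wv U * wv V) (wv F)).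
Proof.
move=> le_m; split.
- apply: (ideal_leibniz_add_corr I_ideal (prod222_defect5 A B C D U V F le_m)
      (prod222_defect5 A C B D U V F ltac:(size_tac))
      (mem_prod223_sw23 A B C D U F V ltac:(size_tac))).
  + exact: (Hq A B C D U F ltac:(size_tac)).1.
  + exact: (Hq A B C D V F ltac:(size_tac)).1.
- apply: (ideal_leibniz_add_corr I_ideal (prod222_defect5 A B C D U V F le_m)
      (prod222_defect4 A B C U V D F ltac:(size_tac))
      (mem_prod223_sw45 A B C D U F V ltac:(size_tac))).
  + exact: (Hq A B C D U F ltac:(size_tac)).2.
  + exact: (Hq A B C D V F ltac:(size_tac)).2.
Qed.

Lemma prod222_sw_slot6 A B C D E U V :
  (wsize A + wsize B + wsize C + wsize D + wsize E + wsize U + wsize V <= m.+1)%N ->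
  I (prod222_sw23 (wv A) (wv B) (wv C) (wv D) (wv E) (wv U * wv V)) /\
  I (prod222_sw45 (wv A) (wv B) (wv C) (wv D) (wv E) (wv U * wv V)).
Proof.
move=> le_m; split.
- apply: (ideal_leibniz_add_corr I_ideal (prod222_defect6 A B C D E U V le_m)
      (prod222_defect6 A C B D E U V ltac:(size_tac))
      (mem_prod223_sw23 A B C D E U V ltac:(size_tac))).
  + exact: (Hq A B C D E U ltac:(size_tac)).1.
  + exact: (Hq A B C D E V ltac:(size_tac)).1.
- apply: (ideal_leibniz_add_corr I_ideal (prod222_defect6 A B C D E U V le_m)
      (prod222_defect6 A B C E D U V ltac:(size_tac))
      (mem_prod223_sw45 A B C D E U V ltac:(size_tac))).
  + exact: (Hq A B C D E U ltac:(size_tac)).2.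
  + exact: (Hq A B C D E V ltac:(size_tac)).2.
Qed.

Lemma prod222_sw_upto_step : prod222_sw_upto I m.+1.
Proof.
move=> a b c d e f le_m.
case: a le_m => a0 [|a1 a] le_m;
  last by rewrite wv_cons; apply: prod222_sw_slot1; size_tac.
case: b le_m => b0 [|b1 b] le_m;
  last by rewrite wv_cons; apply: prod222_sw_slot2; size_tac.
case: c le_m => c0 [|c1 c] le_m;
  last by rewrite wv_cons; apply: prod222_sw_slot3; size_tac.
case: d le_m => d0 [|d1 d] le_m;
  last by rewrite wv_cons; apply: prod222_sw_slot4; size_tac.
case: e le_m => e0 [|e1 e] le_m;
  last by rewrite wv_cons; apply: prod222_sw_slot5; size_tac.
case: f le_m => f0 [|f1 f] le_m;
  last by rewrite wv_cons; apply: prod222_sw_slot6; size_tac.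
by rewrite !wv_letter; apply: prod222_sw_letters.
Qed.

Lemma prod23_defect1 U V B C D E :
  (wsize U + wsize V + wsize B + wsize C + wsize D + wsize E <= m.+1)%N ->
  I (leibniz_defect (fun x => prod23 x (wv B) (wv C) (wv D) (wv E)) (wv U) (wv V)).
Proof.
move=> le_m; have_mem (Hc C D E V ltac:(size_tac)).
apply: (ideal_eq_mem
  (- (comm (wv U) (wv B) * comm4 (wv C) (wv D) (wv E) (wv V)))).
  by defect_ring.
ideal_auto I_ideal.
Qed.

Lemma prod23_defect3 A B U V D E :
  (wsize A + wsize B + wsize U + wsize V + wsize D + wsize E <= m.+1)%N ->
  I (leibniz_defect (fun x => prod23 (wv A) (wv B) x (wv D) (wv E)) (wv U) (wv V)).
Proof.
move=> le_m; have_mem (Hk1 A B U V D E ltac:(size_tac)).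
have_mem (Hq1 A B U D V E ltac:(size_tac)).2; have_mem (Hq1 A B U E V D ltac:(size_tac)).2.
apply: (ideal_eq_mem
  (prod33 (wv A) (wv B) (wv U) (wv V) (wv D) (wv E) +
   prod222_sw45 (wv A) (wv B) (wv U) (wv D) (wv V) (wv E) +
   prod222_sw45 (wv A) (wv B) (wv U) (wv E) (wv V) (wv D))).
  by defect_ring.
ideal_auto I_ideal.
Qed.

Lemma prod23_defect5 A B C D U V :
  (wsize A + wsize B + wsize C + wsize D + wsize U + wsize V <= m.+1)%N ->
  I (leibniz_defect (fun x => prod23 (wv A) (wv B) (wv C) (wv D) x) (wv U) (wv V)).
Proof.
move=> le_m; have_mem (Hk1 A B U C D V ltac:(size_tac)).
apply: (ideal_eq_mem
  (prod33 (wv A) (wv B) (wv U) (wv C) (wv D) (wv V))).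
  by defect_ring.
ideal_auto I_ideal.
Qed.

Lemma prod23_defect2 A U V C D E :
  (wsize A + wsize U + wsize V + wsize C + wsize D + wsize E <= m.+1)%N ->
  I (leibniz_defect (fun x => prod23 (wv A) x (wv C) (wv D) (wv E)) (wv U) (wv V)).
Proof.
move=> le_m; have_mem (prod23_defect1 U V A C D E ltac:(size_tac)).
apply: (ideal_eq_mem
  (- leibniz_defect (fun x : ZX => prod23 x (wv A) (wv C) (wv D) (wv E)) (wv U) (wv V))).
  by defect_ring.
ideal_auto I_ideal.
Qed.

Lemma prod23_defect4 A B C U V E :
  (wsize A + wsize B + wsize C + wsize U + wsize V + wsize E <= m.+1)%N ->
  I (leibniz_defect (fun x => prod23 (wv A) (wv B) (wv C) x (wv E)) (wv U) (wv V)).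
Proof.
move=> le_m; have_mem (prod23_defect3 A B U V C E ltac:(size_tac)).
apply: (ideal_eq_mem
  (- leibniz_defect (fun x : ZX => prod23 (wv A) (wv B) x (wv C) (wv E)) (wv U) (wv V))).
  by defect_ring.
ideal_auto I_ideal.
Qed.

Hypothesis prod23_sw_letters : forall a b c d e : nat,
  I (prod23_sw23 (xv a) (xv b) (xv c) (xv d) (xv e)) /\
  I (prod23_sw45 (xv a) (xv b) (xv c) (xv d) (xv e)).

Lemma prod23_sw_slot1 U V B C D E :
  (wsize U + wsize V + wsize B + wsize C + wsize D + wsize E <= m.+1)%N ->
  I (prod23_sw23 (wv U * wv V) (wv B) (wv C) (wv D) (wv E)) /\
  I (prod23_sw45 (wv U * wv V) (wv B) (wv C) (wv D) (wv E)).
Proof.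
move=> le_m; split.
- apply: (ideal_leibniz_add I_ideal (prod23_defect1 U V B C D E le_m)
      (prod23_defect1 U V C B D E ltac:(size_tac))).
  + exact: (Hs U B C D E ltac:(size_tac)).1.
  + exact: (Hs V B C D E ltac:(size_tac)).1.
- apply: (ideal_leibniz_add I_ideal (prod23_defect1 U V B C D E le_m)
      (prod23_defect1 U V B C E D ltac:(size_tac))).
  + exact: (Hs U B C D E ltac:(size_tac)).2.
  + exact: (Hs V B C D E ltac:(size_tac)).2.
Qed.

Lemma prod23_sw_slot2 A U V C D E :
  (wsize A + wsize U + wsize V + wsize C + wsize D + wsize E <= m.+1)%N ->
  I (prod23_sw23 (wv A) (wv U * wv V) (wv C) (wv D) (wv E)) /\
  I (prod23_sw45 (wv A) (wv U * wv V) (wv C) (wv D) (wv E)).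
Proof.
move=> le_m; split.
- apply: (ideal_leibniz_add I_ideal (prod23_defect2 A U V C D E le_m)
      (prod23_defect3 A C U V D E ltac:(size_tac))).
  + exact: (Hs A U C D E ltac:(size_tac)).1.
  + exact: (Hs A V C D E ltac:(size_tac)).1.
- apply: (ideal_leibniz_add I_ideal (prod23_defect2 A U V C D E le_m)
      (prod23_defect2 A U V C E D ltac:(size_tac))).
  + exact: (Hs A U C D E ltac:(size_tac)).2.
  + exact: (Hs A V C D E ltac:(size_tac)).2.
Qed.

Lemma prod23_sw_slot3 A B U V D E :
  (wsize A + wsize B + wsize U + wsize V + wsize D + wsize E <= m.+1)%N ->
  I (prod23_sw23 (wv A) (wv B) (wv U * wv V) (wv D) (wv E)) /\
  I (prod23_sw45 (wv A) (wv B) (wv U * wv V) (wv D) (wv E)).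
Proof.
move=> le_m; split.
- apply: (ideal_leibniz_add I_ideal (prod23_defect3 A B U V D E le_m)
      (prod23_defect2 A U V B D E ltac:(size_tac))).
  + exact: (Hs A B U D E ltac:(size_tac)).1.
  + exact: (Hs A B V D E ltac:(size_tac)).1.
- apply: (ideal_leibniz_add I_ideal (prod23_defect3 A B U V D E le_m)
      (prod23_defect3 A B U V E D ltac:(size_tac))).
  + exact: (Hs A B U D E ltac:(size_tac)).2.
  + exact: (Hs A B V D E ltac:(size_tac)).2.
Qed.

Lemma prod23_sw_slot4 A B C U V E :
  (wsize A + wsize B + wsize C + wsize U + wsize V + wsize E <= m.+1)%N ->
  I (prod23_sw23 (wv A) (wv B) (wv C) (wv U * wv V) (wv E)) /\
  I (prod23_sw45 (wv A) (wv B) (wv C) (wv U * wv V) (wv E)).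
Proof.
move=> le_m; split.
- apply: (ideal_leibniz_add I_ideal (prod23_defect4 A B C U V E le_m)
      (prod23_defect4 A C B U V E ltac:(size_tac))).
  + exact: (Hs A B C U E ltac:(size_tac)).1.
  + exact: (Hs A B C V E ltac:(size_tac)).1.
- apply: (ideal_leibniz_add I_ideal (prod23_defect4 A B C U V E le_m)
      (prod23_defect5 A B C E U V ltac:(size_tac))).
  + exact: (Hs A B C U E ltac:(size_tac)).2.
  + exact: (Hs A B C V E ltac:(size_tac)).2.
Qed.

Lemma prod23_sw_slot5 A B C D U V :
  (wsize A + wsize B + wsize C + wsize D + wsize U + wsize V <= m.+1)%N ->
  I (prod23_sw23 (wv A) (wv B) (wv C) (wv D) (wv U * wv V)) /\
  I (prod23_sw45 (wv A) (wv B) (wv C) (wv D) (wv U * wv V)).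
Proof.
move=> le_m; split.
- apply: (ideal_leibniz_add I_ideal (prod23_defect5 A B C D U V le_m)
      (prod23_defect5 A C B D U V ltac:(size_tac))).
  + exact: (Hs A B C D U ltac:(size_tac)).1.
  + exact: (Hs A B C D V ltac:(size_tac)).1.
- apply: (ideal_leibniz_add I_ideal (prod23_defect5 A B C D U V le_m)
      (prod23_defect4 A B C U V D ltac:(size_tac))).
  + exact: (Hs A B C D U ltac:(size_tac)).2.
  + exact: (Hs A B C D V ltac:(size_tac)).2.
Qed.

Lemma prod23_sw_upto_step : prod23_sw_upto I m.+1.
Proof.
move=> a b c d e le_m.
case: a le_m => a0 [|a1 a] le_m;
  last by rewrite wv_cons; apply: prod23_sw_slot1; size_tac.
case: b le_m => b0 [|b1 b] le_m;
  last by rewrite wv_cons; apply: prod23_sw_slot2; size_tac.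
case: c le_m => c0 [|c1 c] le_m;
  last by rewrite wv_cons; apply: prod23_sw_slot3; size_tac.
case: d le_m => d0 [|d1 d] le_m;
  last by rewrite wv_cons; apply: prod23_sw_slot4; size_tac.
case: e le_m => e0 [|e1 e] le_m;
  last by rewrite wv_cons; apply: prod23_sw_slot5; size_tac.
by rewrite !wv_letter; apply: prod23_sw_letters.
Qed.

Lemma comm4_defect1 U V B C D :
  (wsize U + wsize V + wsize B + wsize C + wsize D <= m.+1)%N ->
  I (leibniz_defect (fun x => comm4 x (wv B) (wv C) (wv D)) (wv U) (wv V)).
Proof.
move=> le_m.
have_mem (Hc U B C D ltac:(size_tac)); have_mem (Hc U B C V ltac:(size_tac)).
have_mem (Hc U B D C ltac:(size_tac)); have_mem (Hc U B D V ltac:(size_tac)).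
have_mem (Hc U C D B ltac:(size_tac)); have_mem (Hc U C D V ltac:(size_tac)).
have_mem (Hs1 U C V B D ltac:(size_tac)).1; have_mem (Hs1 U D V B C ltac:(size_tac)).1.
have_mem (Hs1 U V B D C ltac:(size_tac)).2; have_mem (Hs1 V D U B C ltac:(size_tac)).1.
have_mem (Hs1 V U B D C ltac:(size_tac)).2; have_mem (Hs1 V C U B D ltac:(size_tac)).1.
have_mem (Hs1 B V U C D ltac:(size_tac)).1.
apply: (ideal_eq_mem
  (prod23_sw23 (wv U) (wv C) (wv V) (wv B) (wv D) +
   prod23_sw23 (wv U) (wv D) (wv V) (wv B) (wv C) +
   prod23_sw45 (wv U) (wv V) (wv B) (wv D) (wv C) +
   prod23_sw23 (wv V) (wv D) (wv U) (wv B) (wv C) +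
   prod23_sw45 (wv V) (wv U) (wv B) (wv D) (wv C) +
   prod23_sw23 (wv V) (wv C) (wv U) (wv B) (wv D) -
   prod23_sw23 (wv B) (wv V) (wv U) (wv C) (wv D) +
   (wv V * comm4 (wv U) (wv B) (wv C) (wv D) + comm4 (wv U) (wv B) (wv C) (wv V) * wv D -
    wv D * comm4 (wv U) (wv B) (wv C) (wv V) - comm4 (wv U) (wv B) (wv C) (wv D) * wv V) +
   (wv V * comm4 (wv U) (wv B) (wv D) (wv C) + comm4 (wv U) (wv B) (wv D) (wv V) * wv C -
    wv C * comm4 (wv U) (wv B) (wv D) (wv V) - comm4 (wv U) (wv B) (wv D) (wv C) * wv V) +
   (wv V * comm4 (wv U) (wv C) (wv D) (wv B) + comm4 (wv U) (wv C) (wv D) (wv V) * wv B -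
    wv B * comm4 (wv U) (wv C) (wv D) (wv V) - comm4 (wv U) (wv C) (wv D) (wv B) * wv V))).
  by defect_ring.
ideal_auto I_ideal.
Qed.

Lemma comm4_defect2 A U V C D :
  (wsize A + wsize U + wsize V + wsize C + wsize D <= m.+1)%N ->
  I (leibniz_defect (fun x => comm4 (wv A) x (wv C) (wv D)) (wv U) (wv V)).
Proof.
move=> le_m; have_mem (comm4_defect1 U V A C D ltac:(size_tac)).
apply: (ideal_eq_mem
  (- leibniz_defect (fun x : ZX => comm4 x (wv A) (wv C) (wv D)) (wv U) (wv V))).
  by defect_ring.
ideal_auto I_ideal.
Qed.

Lemma comm4_defect3 A B U V D :
  (wsize A + wsize B + wsize U + wsize V + wsize D <= m.+1)%N ->
  I (leibniz_defect (fun x => comm4 (wv A) (wv B) x (wv D)) (wv U) (wv V)).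
Proof.
move=> le_m; have_mem (Hc A B U D ltac:(size_tac)); have_mem (Hc A B U V ltac:(size_tac)).
have_mem (Hs1 D V A B U ltac:(size_tac)).1; have_mem (Hs1 D A B V U ltac:(size_tac)).2.
have_mem (Hs1 D A U B V ltac:(size_tac)).1.
apply: (ideal_eq_mem
  (- prod23_sw23 (wv D) (wv V) (wv A) (wv B) (wv U) -
   prod23_sw45 (wv D) (wv A) (wv B) (wv V) (wv U) -
   prod23_sw23 (wv D) (wv A) (wv U) (wv B) (wv V) +
   (wv V * comm4 (wv A) (wv B) (wv U) (wv D) + comm4 (wv A) (wv B) (wv U) (wv V) * wv D -
    wv D * comm4 (wv A) (wv B) (wv U) (wv V) - comm4 (wv A) (wv B) (wv U) (wv D) * wv V))).
  by defect_ring.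
ideal_auto I_ideal.
Qed.

Lemma comm4_defect4 A B C U V :
  I (leibniz_defect (fun x => comm4 (wv A) (wv B) (wv C) x) (wv U) (wv V)).
Proof. by apply: (ideal_eq_mem 0); [defect_ring | exact: (is_ideal0 I_ideal)]. Qed.

Hypothesis comm4_letters : forall a b c d : nat, I (comm4 (xv a) (xv b) (xv c) (xv d)).

Lemma comm4_slot1 U V B C D :
  (wsize U + wsize V + wsize B + wsize C + wsize D <= m.+1)%N ->
  I (comm4 (wv U * wv V) (wv B) (wv C) (wv D)).
Proof.
move=> le_m; apply: (ideal_leibniz I_ideal (comm4_defect1 U V B C D le_m)).
  by apply: Hc; size_tac.
by apply: Hc; size_tac.
Qed.

Lemma comm4_slot2 A U V C D :
  (wsize A + wsize U + wsize V + wsize C + wsize D <= m.+1)%N ->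
  I (comm4 (wv A) (wv U * wv V) (wv C) (wv D)).
Proof.
move=> le_m; apply: (ideal_leibniz I_ideal (comm4_defect2 A U V C D le_m)).
  by apply: Hc; size_tac.
by apply: Hc; size_tac.
Qed.

Lemma comm4_slot3 A B U V D :
  (wsize A + wsize B + wsize U + wsize V + wsize D <= m.+1)%N ->
  I (comm4 (wv A) (wv B) (wv U * wv V) (wv D)).
Proof.
move=> le_m; apply: (ideal_leibniz I_ideal (comm4_defect3 A B U V D le_m)).
  by apply: Hc; size_tac.
by apply: Hc; size_tac.
Qed.

Lemma comm4_slot4 A B C U V :
  (wsize A + wsize B + wsize C + wsize U + wsize V <= m.+1)%N ->
  I (comm4 (wv A) (wv B) (wv C) (wv U * wv V)).
Proof.
move=> le_m; apply: (ideal_leibniz I_ideal (comm4_defect4 A B C U V)).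
  by apply: Hc; size_tac.
by apply: Hc; size_tac.
Qed.

Lemma comm4_upto_step : comm4_upto I m.+1.
Proof.
move=> a b c d le_m.
case: a le_m => a0 [|a1 a] le_m;
  last by rewrite wv_cons; apply: comm4_slot1; size_tac.
case: b le_m => b0 [|b1 b] le_m;
  last by rewrite wv_cons; apply: comm4_slot2; size_tac.
case: c le_m => c0 [|c1 c] le_m;
  last by rewrite wv_cons; apply: comm4_slot3; size_tac.
case: d le_m => d0 [|d1 d] le_m;
  last by rewrite wv_cons; apply: comm4_slot4; size_tac.
by rewrite !wv_letter; apply: comm4_letters.
Qed.

End InductionStep.

Lemma ideal_additive_xmon (I : ZX -> Prop) (I_ideal : is_ideal I) (F : ZX -> ZX) :
  (forall x y, F (x - y) = F x - F y) ->
  (forall s, I (F (xmon s))) -> forall x, I (F x).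
Proof.
move=> FB Fmon; have F0 : F 0 = 0 by have := FB 0 0; rewrite !subrr.
have FN x : F (- x) = - F x by rewrite -sub0r FB F0 sub0r.
elim/ZX_xmon_ind => [|x y Ix Iy|x Ix|s]; last exact: Fmon.
- by rewrite F0; exact: (is_ideal0 I_ideal).
- by rewrite -{1}[y]opprK FB FN opprK; exact: (is_idealD I_ideal).
- by rewrite FN; exact: (is_idealN I_ideal).
Qed.

Section AllLevels.
Variables (I : ZX -> Prop) (I_ideal : is_ideal I).
Hypothesis comm4_letters : forall a b c d : nat, I (comm4 (xv a) (xv b) (xv c) (xv d)).
Hypothesis prod33_letters : forall a b c d e f : nat,
  I (prod33 (xv a) (xv b) (xv c) (xv d) (xv e) (xv f)).
Hypothesis prod23_sw_letters : forall a b c d e : nat,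
  I (prod23_sw23 (xv a) (xv b) (xv c) (xv d) (xv e)) /\
  I (prod23_sw45 (xv a) (xv b) (xv c) (xv d) (xv e)).
Hypothesis prod222_sw_letters : forall a b c d e f : nat,
  I (prod222_sw23 (xv a) (xv b) (xv c) (xv d) (xv e) (xv f)) /\
  I (prod222_sw45 (xv a) (xv b) (xv c) (xv d) (xv e) (xv f)).

Lemma comm4_upto_all m : comm4_upto I m.
Proof.
suff [] : [/\ comm4_upto I m, prod23_sw_upto I m, prod33_upto I m & prod222_sw_upto I m] by [].
elim: m => [|m [Hc Hs Hk Hq]].
  by split; [move=> ? ? ? ? | move=> ? ? ? ? ? | move=> ? ? ? ? ? ? | move=> ? ? ? ? ? ?];
    move=> le0; exfalso; size_tac.
have Hk1 := prod33_upto_step I I_ideal m Hc Hs Hk prod33_letters.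
have Hq1 := prod222_sw_upto_step I I_ideal m Hc Hs Hq prod222_sw_letters.
have Hs1 := prod23_sw_upto_step I I_ideal m Hc Hs Hk1 Hq1 prod23_sw_letters.
by split=> //; exact: comm4_upto_step I I_ideal m Hc Hs1 comm4_letters.
Qed.

Lemma ideal_comm4 a b c d : I (comm4 a b c d).
Proof.
have comm4_xmon s1 s2 s3 s4 : I (comm4 (xmon s1) (xmon s2) (xmon s3) (xmon s4)).
  case: s1 s2 s3 s4 => [|x1 s1] [|x2 s2] [|x3 s3] [|x4 s4];
    try by apply: (ideal_eq_mem 0); [rewrite /=; comm_ring | exact: (is_ideal0 I_ideal)].
  by have := @comm4_upto_all _ (x1, s1) (x2, s2) (x3, s3) (x4, s4) (leqnn _).
have comm4_1 a' s2 s3 s4 : I (comm4 a' (xmon s2) (xmon s3) (xmon s4)).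
  apply: (ideal_additive_xmon I_ideal (F := fun x => comm4 x (xmon s2) (xmon s3) (xmon s4))).
    by move=> x y; comm_ring.
  by move=> s1; exact: comm4_xmon.
have comm4_2 a' b' s3 s4 : I (comm4 a' b' (xmon s3) (xmon s4)).
  apply: (ideal_additive_xmon I_ideal (F := fun x => comm4 a' x (xmon s3) (xmon s4))).
    by move=> x y; comm_ring.
  by move=> s2; exact: comm4_1.
have comm4_3 a' b' c' s4 : I (comm4 a' b' c' (xmon s4)).
  apply: (ideal_additive_xmon I_ideal (F := fun x => comm4 a' b' x (xmon s4))).
    by move=> x y; comm_ring.
  by move=> s3; exact: comm4_2.
apply: (ideal_additive_xmon I_ideal (F := fun x => comm4 a b c x)); last exact: comm4_3.
by move=> x y; comm_ring.
Qed.

End AllLevels.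

Lemma lideal_Gens_comm4 a b c d : lideal Gens (comm4 a b c d).
Proof.
apply: (ideal_comm4 lideal_Gens_ideal).
- by move=> x y z t; apply: lideal_lcomm_of_letters; exists x, [:: y; z; t].
- exact: lideal_prod33.
- by move=> *; split; [exact: lideal_prod23_sw23 | exact: lideal_prod23_sw45].
- by move=> *; split; [exact: lideal_prod222_sw23 | exact: lideal_prod222_sw45].
Qed.

Theorem lemma3p2 : forall f : ZX, T4 f <-> lideal Gens f.
Proof.
move=> f; split.
- apply: (ideal2_sub lideal_Gens_ideal) => _ [a [b [c [d ->]]]].
  exact: lideal_Gens_comm4.
- exact: (lideal_sub T4_ideal T4_Gens).
Qed.
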